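(* For all complex $q$ with $|q|<1$, $$F^{\rm ed}_{\rm ou}(-q)=-\frac{(-q^2;q^2)_\infty}{2}\left(2-\frac{1}{(-q;q)_\infty}-\frac{2}{(q;q)_\infty}\sum_{n\in\mathbb Z}\frac{(-1)^n q^{\frac{3n(n+1)}{2}}}{1+q^n}\right).$$
   Context: For $n\in\mathbb N_0\cup\{\infty\}$, $(a;q)_n:=\prod_{j=0}^{n-1}(1-aq^j)$. Define $$F^{\rm ed}_{\rm ou}(q):=\sum_{n=0}^\infty \frac{q^{2n+1}(-q^{2n+2};q^2)_\infty}{(q;q^2)_{n+1}},$$ the generating function for partitions into at least one odd part, with odd parts unrestricted in multiplicity, and even parts distinct and all larger than every odd part; $F^{\rm ed}_{\rm ou}(-q)$ denotes this function evaluated at $-q$. *)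

From Stdlib Require Import Reals ZArith ClassicalEpsilon.
Open Scope R_scope.

Record Cplx := Cmk { Re : R; Im : R }.

Definition Czero : Cplx := Cmk 0 0.
Definition Cone : Cplx := Cmk 1 0.
Definition Ctwo : Cplx := Cmk 2 0.
Definition Cadd (z w : Cplx) : Cplx := Cmk (Re z + Re w) (Im z + Im w).
Definition Copp (z : Cplx) : Cplx := Cmk (- Re z) (- Im z).
Definition Csub (z w : Cplx) : Cplx := Cadd z (Copp w).
Definition Cmul (z w : Cplx) : Cplx :=
  Cmk (Re z * Re w - Im z * Im w) (Re z * Im w + Im z * Re w).
Definition Cinv (z : Cplx) : Cplx :=
  Cmk (Re z / (Re z ^ 2 + Im z ^ 2)) (- Im z / (Re z ^ 2 + Im z ^ 2)).
Definition Cdiv (z w : Cplx) : Cplx := Cmul z (Cinv w).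
Fixpoint Cpow (z : Cplx) (n : nat) : Cplx :=
  match n with O => Cone | S k => Cmul z (Cpow z k) end.
Definition Cnorm (z : Cplx) : R := sqrt (Re z ^ 2 + Im z ^ 2).

(** Convergence of sequences and limits (limit chosen by classical epsilon;
    only meaningful when the sequence converges). *)
Definition Ccv (u : nat -> Cplx) (l : Cplx) : Prop :=
  forall eps : R, eps > 0 -> exists N : nat, forall n : nat, (n >= N)%nat ->
    Cnorm (Csub (u n) l) < eps.
Definition Clim (u : nat -> Cplx) : Cplx :=
  epsilon (inhabits Czero) (fun l => Ccv u l).

Fixpoint Cpsum (f : nat -> Cplx) (N : nat) : Cplx :=
  match N with O => Czero | S k => Cadd (Cpsum f k) (f k) end.
Fixpoint Cpprod (f : nat -> Cplx) (N : nat) : Cplx :=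
  match N with O => Cone | S k => Cmul (Cpprod f k) (f k) end.
Definition Cseries (f : nat -> Cplx) : Cplx := Clim (Cpsum f).

Definition qpoch (a q : Cplx) (n : nat) : Cplx :=
  Cpprod (fun j => Csub Cone (Cmul a (Cpow q j))) n.
Definition qpoch_inf (a q : Cplx) : Cplx := Clim (qpoch a q).

Definition F_ed_ou (q : Cplx) : Cplx :=
  Cseries (fun n =>
    Cdiv (Cmul (Cpow q (2 * n + 1))
               (qpoch_inf (Copp (Cpow q (2 * n + 2))) (Cpow q 2)))
         (qpoch q (Cpow q 2) (n + 1))).

(** Term of the bilateral sum  (-1)^n q^{3n(n+1)/2} / (1 + q^n), n in Z.  For n = -m < 0, numerator and
    denominator are multiplied by q^m, giving
    (-1)^m q^{3m(m-1)/2 + m} / (q^m + 1), which equals the original term for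
    q <> 0 and is its continuous (analytic) extension at q = 0. *)
Definition bil_term (q : Cplx) (n : Z) : Cplx :=
  if Z.leb 0 n then
    let k := Z.to_nat n in
    Cdiv (Cmul (Cpow (Copp Cone) k) (Cpow q (3 * k * (k + 1) / 2)))
         (Cadd Cone (Cpow q k))
  else
    let m := Z.to_nat (- n) in
    Cdiv (Cmul (Cpow (Copp Cone) m) (Cpow q (3 * m * (m - 1) / 2 + m)))
         (Cadd (Cpow q m) Cone).

Definition Zsum (f : Z -> Cplx) : Cplx :=
  Cadd (Cseries (fun n => f (Z.of_nat n)))
       (Cseries (fun m => f (- Z.of_nat (S m))%Z)).

From Pilot Require Import Defs.
From Stdlib Require Import Reals ZArith Lra Lia ClassicalEpsilon.
From Coquelicot Require Import Coquelicot.
Open Scope R_scope.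

(* Write (a)_n for (a;q)_n.  Since (-q^(2n+2);q^2)_oo = (-q^2;q^2)_oo / (-q^2;q^2)_n and
   (-q;q^2)_(n+1) (-q^2;q^2)_n = (-q)_(2n+1), the n-th term of F(-q) is
   -(-q^2;q^2)_oo q^(2n+1) / (-q)_(2n+1), so F(-q) = -(-q^2;q^2)_oo (T - G) / 2 with
   T = sum q^n / (-q)_n = 2 - 1/(-q)_oo (a telescoping sum) and G = sum (-q)^n / (-q)_n.

   Iterating the Heine-type relation Phi(x) = 1/(1-x) + x^2/(1-x)^2 Phi(xq) for
   Phi(x) = sum x^k / (x)_k, starting from Phi(-q) = G, gives
   G = sum q^(n(n+1)) / ((-q)_n (-q)_(n+1)), and this telescopes against
   f = sum q^(n^2) / (-q)_n^2 to G + f = 2.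
   Bailey's lemma with rho1 = rho2 = -1 turns the unit Bailey pair into the pair
   (kappa_r alpha_r, 1/(-q)_n^2); feeding both pairs into the limiting Bailey lemma and letting
   N -> oo (Tannery's theorem) gives (q)_oo (2 - f) = sum_r (2 - kappa_r) alpha_r q^(r^2),
   which regroups into twice the bilateral sum. *)

(** * Limits and series of complex sequences *)

Lemma Cminus_0_r (z : C) : (z - 0)%C = z.
Proof. ring. Qed.

Ltac field_hyps := field; repeat split; cbv beta; try assumption.

Fixpoint psum (f : nat -> C) (n : nat) : C :=
  match n with O => RtoC 0 | S k => (psum f k + f k)%C end.

Definition is_lim_C (u : nat -> C) (l : C) : Prop :=
  forall eps, 0 < eps -> exists N, forall n, (N <= n)%nat -> Cmod (u n - l) < eps.

Definition is_series_C (f : nat -> C) (l : C) : Prop := is_lim_C (psum f) l.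

Lemma Cmod_minus_sym (a b : C) : Cmod (a - b) = Cmod (b - a).
Proof. replace (a - b)%C with (- (b - a))%C by ring. apply Cmod_opp. Qed.

Lemma Cmod_minus_triangle (a b c : C) : Cmod (a - c) <= Cmod (a - b) + Cmod (b - c).
Proof. replace (a - c)%C with ((a - b) + (b - c))%C by ring. apply Cmod_triangle. Qed.

Lemma Cmod_pos_neq0 (z : C) (m : R) : 0 < m -> m <= Cmod z -> z <> RtoC 0.
Proof. intros Hm Hz E. rewrite E, Cmod_0 in Hz. lra. Qed.

Lemma Cmod_one_minus_ge (z : C) : 1 - Cmod z <= Cmod (1 - z).
Proof.
  pose proof (Cmod_triangle (1 - z) z) as H.
  replace (1 - z + z)%C with (RtoC 1) in H by ring. rewrite Cmod_1 in H. lra.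
Qed.

Lemma Cmod_inv_le (z : C) (m : R) : 0 < m -> m <= Cmod z -> Cmod (/ z) <= / m.
Proof.
  intros Hm Hz. rewrite Cmod_inv by (apply (Cmod_pos_neq0 z m); auto).
  apply Rinv_le_contravar; lra.
Qed.

Lemma Cmod_m1_pow k : Cmod ((-1) ^ k)%C = 1.
Proof.
  rewrite Cmod_pow. replace (Cmod (RtoC (-1))) with 1 by (rewrite Cmod_R, Rabs_left; lra).
  apply pow1.
Qed.

Lemma pow_le_pow_of_le_1 (r : R) (m n : nat) : 0 <= r <= 1 -> (m <= n)%nat -> r ^ n <= r ^ m.
Proof.
  intros Hr Hmn. replace n with (m + (n - m))%nat by lia. rewrite pow_add.
  pose proof (pow_le r m ltac:(lra)).
  assert (r ^ (n - m) <= 1) by (rewrite <- (pow1 (n - m)); apply pow_incr; lra).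
  pose proof (pow_le r (n - m) ltac:(lra)). nra.
Qed.

Lemma geom_eventually_small (M r eps : R) : 0 <= r < 1 -> 0 < eps ->
  exists N, forall n, (N <= n)%nat -> M * r ^ n < eps.
Proof.
  intros Hr He.
  destruct (pow_lt_1_zero r ltac:(rewrite Rabs_pos_eq; lra) (eps / (Rabs M + 1)))
    as [N HN]; [apply Rdiv_lt_0_compat; pose proof (Rabs_pos M); lra|].
  exists N. intros n Hn. specialize (HN n Hn).
  pose proof (Rabs_pos M). pose proof (pow_le r n ltac:(lra)).
  rewrite Rabs_pos_eq in HN by lra.
  apply Rle_lt_trans with ((Rabs M + 1) * r ^ n); [pose proof (Rle_abs M); nra|].
  apply (Rmult_lt_reg_r (/ (Rabs M + 1))); [apply Rinv_0_lt_compat; lra|].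
  replace ((Rabs M + 1) * r ^ n * / (Rabs M + 1)) with (r ^ n) by (field; lra). exact HN.
Qed.

Lemma C_eq_of_Cmod_small (a b : C) : (forall eps, 0 < eps -> Cmod (a - b) < eps) -> a = b.
Proof.
  intros H. assert (E : Cmod (a - b) = 0).
  { destruct (Cmod_ge_0 (a - b)) as [Hl|He]; auto. specialize (H _ Hl). lra. }
  apply Cmod_eq_0 in E. replace a with ((a - b) + b)%C by ring. rewrite E. ring.
Qed.

Lemma is_lim_C_unique u l1 l2 : is_lim_C u l1 -> is_lim_C u l2 -> l1 = l2.
Proof.
  intros H1 H2. apply C_eq_of_Cmod_small. intros eps He.
  destruct (H1 (eps/2)) as [N1 HN1]; [lra|]. destruct (H2 (eps/2)) as [N2 HN2]; [lra|].
  specialize (HN1 (N1 + N2)%nat ltac:(lia)). specialize (HN2 (N1 + N2)%nat ltac:(lia)).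
  rewrite Cmod_minus_sym in HN1. pose proof (Cmod_minus_triangle l1 (u (N1 + N2)%nat) l2). lra.
Qed.

Lemma is_lim_C_const c : is_lim_C (fun _ => c) c.
Proof.
  intros eps He. exists O. intros.
  replace (c - c)%C with (RtoC 0) by ring. rewrite Cmod_0. lra.
Qed.

Lemma is_lim_C_ext u v l : (forall n, u n = v n) -> is_lim_C u l -> is_lim_C v l.
Proof.
  intros E H eps He. destruct (H eps He) as [N HN]. exists N. intros. rewrite <- E. auto.
Qed.

Lemma is_lim_C_subseq u l (h : nat -> nat) :
  (forall N, exists M, forall n, (M <= n)%nat -> (N <= h n)%nat) ->
  is_lim_C u l -> is_lim_C (fun n => u (h n)) l.
Proof.
  intros Hh H eps He. destruct (H eps He) as [N HN]. destruct (Hh N) as [M HM].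
  exists M. auto.
Qed.

Lemma is_lim_C_shift u l k : is_lim_C u l -> is_lim_C (fun n => u (n + k)%nat) l.
Proof. apply is_lim_C_subseq. intros N. exists N. intros; lia. Qed.

Lemma is_lim_C_unshift u l k : is_lim_C (fun n => u (n + k)%nat) l -> is_lim_C u l.
Proof.
  intros H eps He. destruct (H eps He) as [N HN]. exists (N + k)%nat. intros n Hn.
  replace n with ((n - k) + k)%nat by lia. apply HN. lia.
Qed.

Lemma is_lim_C_plus u v a b :
  is_lim_C u a -> is_lim_C v b -> is_lim_C (fun n => u n + v n)%C (a + b)%C.
Proof.
  intros Hu Hv eps He.
  destruct (Hu (eps/2)) as [N1 H1]; [lra|]. destruct (Hv (eps/2)) as [N2 H2]; [lra|].
  exists (N1 + N2)%nat. intros n Hn.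
  replace (u n + v n - (a + b))%C with ((u n - a) + (v n - b))%C by ring.
  specialize (H1 n ltac:(lia)). specialize (H2 n ltac:(lia)).
  pose proof (Cmod_triangle (u n - a) (v n - b)). lra.
Qed.

Lemma is_lim_C_opp u a : is_lim_C u a -> is_lim_C (fun n => - u n)%C (- a)%C.
Proof.
  intros Hu eps He. destruct (Hu eps He) as [N H]. exists N. intros n Hn.
  replace (- u n - - a)%C with (- (u n - a))%C by ring. rewrite Cmod_opp. auto.
Qed.

Lemma is_lim_C_minus u v a b :
  is_lim_C u a -> is_lim_C v b -> is_lim_C (fun n => u n - v n)%C (a - b)%C.
Proof. intros. apply is_lim_C_plus; auto. apply is_lim_C_opp; auto. Qed.

Lemma is_lim_C_bounded u l : is_lim_C u l -> exists M, 0 < M /\ forall n, Cmod (u n) <= M.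
Proof.
  intros H. destruct (H 1) as [N HN]; [lra|].
  assert (Hinit : forall k, exists M, 0 < M /\ forall n, (n < k)%nat -> Cmod (u n) <= M).
  { induction k as [|k [M [HM HMk]]].
    - exists 1. split; [lra|]. intros; lia.
    - exists (M + Cmod (u k)). pose proof (Cmod_ge_0 (u k)). split; [lra|].
      intros n Hn. destruct (Nat.eq_dec n k); [subst; lra|].
      pose proof (HMk n ltac:(lia)). lra. }
  destruct (Hinit N) as [M [HM HMN]]. exists (M + Cmod l + 1). pose proof (Cmod_ge_0 l).
  split; [lra|]. intros n. destruct (Nat.lt_ge_cases n N) as [Hn|Hn].
  - pose proof (HMN n Hn). lra.
  - specialize (HN n Hn). pose proof (Cmod_minus_triangle (u n) l 0).
    rewrite !Cminus_0_r in H1. lra.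
Qed.

Lemma is_lim_C_mult u v a b :
  is_lim_C u a -> is_lim_C v b -> is_lim_C (fun n => u n * v n)%C (a * b)%C.
Proof.
  intros Hu Hv. destruct (is_lim_C_bounded u a Hu) as [M [HM HMb]].
  intros eps He. pose proof (Cmod_ge_0 b) as Hb.
  destruct (Hu (eps / (2 * (Cmod b + 1)))) as [N1 H1]; [apply Rdiv_lt_0_compat; lra|].
  destruct (Hv (eps / (2 * M))) as [N2 H2]; [apply Rdiv_lt_0_compat; lra|].
  exists (N1 + N2)%nat. intros n Hn.
  replace (u n * v n - a * b)%C with (u n * (v n - b) + (u n - a) * b)%C by ring.
  eapply Rle_lt_trans; [apply Cmod_triangle|]. rewrite !Cmod_mult.
  specialize (H1 n ltac:(lia)). specialize (H2 n ltac:(lia)). specialize (HMb n).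
  assert (Cmod (u n) * Cmod (v n - b) <= M * (eps / (2 * M)))
    by (apply Rmult_le_compat; auto using Cmod_ge_0; lra).
  assert (Cmod (u n - a) * Cmod b <= eps / (2 * (Cmod b + 1)) * Cmod b)
    by (apply Rmult_le_compat_r; lra).
  assert (eps / (2 * (Cmod b + 1)) * Cmod b < eps / 2).
  { apply (Rmult_lt_reg_r (2 * (Cmod b + 1))); [lra|]. field_simplify; lra. }
  replace (M * (eps / (2 * M))) with (eps / 2) in * by (field; lra). lra.
Qed.

Lemma is_lim_C_scal c u a : is_lim_C u a -> is_lim_C (fun n => c * u n)%C (c * a)%C.
Proof. intros. apply is_lim_C_mult; auto. apply is_lim_C_const. Qed.

Lemma is_lim_C_dist_le u l a B :
  is_lim_C u l -> (exists N0, forall n, (N0 <= n)%nat -> Cmod (u n - a) <= B) ->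
  Cmod (l - a) <= B.
Proof.
  intros H [N0 HN0]. destruct (Rle_lt_dec (Cmod (l - a)) B) as [|Hlt]; auto.
  destruct (H (Cmod (l - a) - B)) as [N HN]; [lra|].
  specialize (HN (N + N0)%nat ltac:(lia)). specialize (HN0 (N + N0)%nat ltac:(lia)).
  pose proof (Cmod_minus_triangle l (u (N + N0)%nat) a). rewrite Cmod_minus_sym in HN. lra.
Qed.

Lemma is_lim_C_Cmod_ge u l m : is_lim_C u l -> (forall n, m <= Cmod (u n)) -> m <= Cmod l.
Proof.
  intros H Hm. destruct (Rle_lt_dec m (Cmod l)) as [|Hlt]; auto.
  destruct (H (m - Cmod l)) as [N HN]; [lra|]. specialize (HN N (le_n _)).
  pose proof (Cmod_minus_triangle (u N) l 0). rewrite !Cminus_0_r in H0.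
  specialize (Hm N). lra.
Qed.

Lemma is_lim_C_inv u l : is_lim_C u l -> l <> RtoC 0 -> is_lim_C (fun n => / u n)%C (/ l)%C.
Proof.
  intros H Hl. apply Cmod_gt_0 in Hl as Hlp.
  destruct (H (Cmod l / 2)) as [N0 HN0]; [lra|].
  assert (Hlow : forall n, (N0 <= n)%nat -> Cmod l / 2 <= Cmod (u n)).
  { intros n Hn. specialize (HN0 n Hn). pose proof (Cmod_minus_triangle l (u n) 0).
    rewrite !Cminus_0_r in H0. rewrite Cmod_minus_sym in HN0. lra. }
  intros eps He.
  destruct (H (eps * (Cmod l * Cmod l / 2))) as [N1 HN1]; [apply Rmult_lt_0_compat; nra|].
  exists (N0 + N1)%nat. intros n Hn.
  specialize (Hlow n ltac:(lia)). specialize (HN1 n ltac:(lia)).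
  assert (Hun : u n <> RtoC 0) by (apply (Cmod_pos_neq0 _ (Cmod l / 2)); lra).
  replace (/ u n - / l)%C with ((l - u n) * / u n * / l)%C by (field; auto).
  rewrite !Cmod_mult, !Cmod_inv by auto. rewrite Cmod_minus_sym.
  apply (Rmult_lt_reg_r (Cmod (u n) * Cmod l)); [apply Rmult_lt_0_compat; lra|].
  replace (Cmod (u n - l) * / Cmod (u n) * / Cmod l * (Cmod (u n) * Cmod l))
    with (Cmod (u n - l)) by (field; lra).
  assert (Cmod l * Cmod l / 2 <= Cmod (u n) * Cmod l) by nra.
  nra.
Qed.

Lemma is_lim_C_div u v a b :
  is_lim_C u a -> is_lim_C v b -> b <> RtoC 0 -> is_lim_C (fun n => u n / v n)%C (a / b)%C.
Proof. intros. apply is_lim_C_mult; auto. apply is_lim_C_inv; auto. Qed.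

Lemma is_lim_C_geom u l M r :
  0 <= r < 1 -> (forall n, Cmod (u n - l) <= M * r ^ n) -> is_lim_C u l.
Proof.
  intros Hr H eps He. destruct (geom_eventually_small M r eps Hr He) as [N HN].
  exists N. intros n Hn. eapply Rle_lt_trans; [apply H|auto].
Qed.

Lemma is_lim_C_cauchy u :
  (forall eps, 0 < eps -> exists N, forall m n, (N <= m)%nat -> (N <= n)%nat ->
     Cmod (u m - u n) < eps) ->
  exists l, is_lim_C u l.
Proof.
  intros H.
  assert (Hre : Cauchy_crit (fun n => fst (u n))).
  { intros eps He. destruct (H eps He) as [N HN]. exists N. intros n m Hn Hm.
    eapply Rle_lt_trans; [|apply (HN n m); lia].
    pose proof (re_le_Cmod (u n - u m)) as H0.
    replace (Re (u n - u m)%C) with (fst (u n) - fst (u m)) in H0 by (unfold Re; simpl; ring).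
    exact H0. }
  assert (Him : Cauchy_crit (fun n => snd (u n))).
  { intros eps He. destruct (H eps He) as [N HN]. exists N. intros n m Hn Hm.
    eapply Rle_lt_trans; [|apply (HN n m); lia].
    pose proof (re_le_Cmod (Ci * (u n - u m))%C) as H0. rewrite Cmod_mult, Cmod_Ci in H0.
    replace (Re (Ci * (u n - u m))%C) with (- (snd (u n) - snd (u m))) in H0
      by (unfold Re; simpl; ring).
    rewrite Rabs_Ropp in H0. unfold Rdist. lra. }
  destruct (Rcomplete.R_complete _ Hre) as [l1 Hl1].
  destruct (Rcomplete.R_complete _ Him) as [l2 Hl2].
  exists (l1, l2). intros eps He.
  destruct (Hl1 (eps/2)) as [N1 HN1]; [lra|]. destruct (Hl2 (eps/2)) as [N2 HN2]; [lra|].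
  exists (N1 + N2)%nat. intros n Hn.
  specialize (HN1 n ltac:(lia)). specialize (HN2 n ltac:(lia)). unfold Rdist in *.
  eapply Rle_lt_trans; [apply Cmod_2Rmax|]. simpl.
  assert (Hs : sqrt 2 < 2) by (rewrite <- (sqrt_square 2) at 2 by lra; apply sqrt_lt_1; lra).
  assert (Rmax (Rabs (fst (u n) + - l1)) (Rabs (snd (u n) + - l2)) < eps / 2)
    by (apply Rmax_lub_lt; unfold Rminus in *; auto).
  assert (0 <= Rmax (Rabs (fst (u n) + - l1)) (Rabs (snd (u n) + - l2)))
    by (eapply Rle_trans; [apply Rabs_pos|apply Rmax_l]).
  pose proof (sqrt_pos 2). nra.
Qed.

Lemma psum_add f n m : psum f (n + m) = (psum f n + psum (fun k => f (n + k)%nat) m)%C.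
Proof.
  induction m; simpl.
  - rewrite Nat.add_0_r. ring.
  - rewrite Nat.add_succ_r. simpl. rewrite IHm. ring.
Qed.

Lemma psum_succ_l f n : psum f (S n) = (f O + psum (fun k => f (S k)) n)%C.
Proof. replace (S n) with (1 + n)%nat by lia. rewrite psum_add. simpl. ring. Qed.

Lemma psum_ext f g n : (forall k, (k < n)%nat -> f k = g k) -> psum f n = psum g n.
Proof.
  induction n; simpl; intros H; auto.
  rewrite IHn by (intros; apply H; lia). rewrite H by lia. reflexivity.
Qed.

Lemma psum_plus f g n : psum (fun k => f k + g k)%C n = (psum f n + psum g n)%C.
Proof. induction n; simpl; [ring|]. rewrite IHn. ring. Qed.

Lemma psum_minus f g n : psum (fun k => f k - g k)%C n = (psum f n - psum g n)%C.
Proof. induction n; simpl; [ring|]. rewrite IHn. ring. Qed.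

Lemma psum_scal c f n : psum (fun k => c * f k)%C n = (c * psum f n)%C.
Proof. induction n; simpl; [ring|]. rewrite IHn. ring. Qed.

Lemma psum_zero n : psum (fun _ => RtoC 0) n = RtoC 0.
Proof. induction n; simpl; auto. rewrite IHn. ring. Qed.

Lemma psum_rev (g : nat -> C) n : psum g n = psum (fun r => g (n - 1 - r)%nat) n.
Proof.
  induction n; [reflexivity|].
  change (psum g (S n)) with (psum g n + g n)%C. rewrite IHn, psum_succ_l.
  replace (S n - 1 - 0)%nat with n by lia.
  rewrite Cplus_comm. f_equal. apply psum_ext. intros k Hk. f_equal. lia.
Qed.

Lemma psum_fold_center (g : nat -> C) n :
  psum g (2 * n + 1) = (g n + psum (fun r => g (n + 1 + r)%nat + g (n - 1 - r)%nat) n)%C.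
Proof.
  replace (2 * n + 1)%nat with (n + (1 + n))%nat by lia.
  rewrite !psum_add, psum_plus, (psum_rev g n). simpl. rewrite Nat.add_0_r.
  replace (psum (fun k => g (n + S k)%nat) n) with (psum (fun r => g (n + 1 + r)%nat) n)
    by (apply psum_ext; intros; f_equal; lia).
  ring.
Qed.

Lemma psum_triangle_swap (X : nat -> nat -> C) n :
  psum (fun j => psum (fun r => X j r) (S j)) (S n) =
  psum (fun r => psum (fun i => X (r + i)%nat r) (S (n - r))) (S n).
Proof.
  induction n; [simpl; ring|].
  change (psum (fun j => psum (fun r => X j r) (S j)) (S (S n))) with
    (psum (fun j => psum (fun r => X j r) (S j)) (S n) + psum (fun r => X (S n) r) (S (S n)))%C.
  rewrite IHn.
  change (psum (fun r => psum (fun i => X (r + i)%nat r) (S (S n - r))) (S (S n))) with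
    (psum (fun r => psum (fun i => X (r + i)%nat r) (S (S n - r))) (S n) +
     psum (fun i => X (S n + i)%nat (S n)) (S (S n - S n)))%C.
  replace (S n - S n)%nat with O by lia.
  replace (psum (fun r => psum (fun i => X (r + i)%nat r) (S (S n - r))) (S n)) with
    (psum (fun r => psum (fun i => X (r + i)%nat r) (S (n - r))) (S n) +
     psum (fun r => X (S n) r) (S n))%C.
  - change (psum (fun r => X (S n) r) (S (S n))) with
      (psum (fun r => X (S n) r) (S n) + X (S n) (S n))%C.
    change (psum (fun i => X (S n + i)%nat (S n)) 1) with (RtoC 0 + X (S n + 0)%nat (S n))%C.
    rewrite Nat.add_0_r. ring.
  - rewrite <- psum_plus. apply psum_ext. intros r Hr.
    replace (S (S n - r)) with (S (n - r) + 1)%nat by lia. rewrite psum_add.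
    change (psum ?f 1) with (RtoC 0 + f O)%C. cbv beta.
    replace (r + (S (n - r) + 0))%nat with (S n) by lia. ring.
Qed.

Lemma dom_nonneg (f : nat -> C) M r : (forall k, Cmod (f k) <= M * r ^ k) -> 0 <= M.
Proof. intros H. specialize (H O). simpl in H. pose proof (Cmod_ge_0 (f O)). lra. Qed.

Lemma psum_geom_bound (g : nat -> C) A r m : 0 <= r < 1 ->
  (forall k, Cmod (g k) <= A * r ^ k) -> Cmod (psum g m) <= A / (1 - r).
Proof.
  intros Hr H. pose proof (dom_nonneg g A r H) as HA.
  assert (Hm : Cmod (psum g m) <= A * (1 - r ^ m) / (1 - r)).
  { induction m; simpl.
    - rewrite Cmod_0. replace (A * (1 - 1) / (1 - r)) with 0 by (field; lra). lra.
    - eapply Rle_trans; [apply Cmod_triangle|].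
      replace (A * (1 - r * r ^ m) / (1 - r)) with (A * (1 - r ^ m) / (1 - r) + A * r ^ m)
        by (field; lra).
      specialize (H m). lra. }
  eapply Rle_trans; [exact Hm|]. apply Rmult_le_compat_r; [apply Rlt_le, Rinv_0_lt_compat; lra|].
  pose proof (pow_le r m ltac:(lra)). nra.
Qed.

Lemma psum_tail_bound (f : nat -> C) M r n m : 0 <= r < 1 -> (n <= m)%nat ->
  (forall k, Cmod (f k) <= M * r ^ k) -> Cmod (psum f m - psum f n) <= M / (1 - r) * r ^ n.
Proof.
  intros Hr Hnm H. replace m with (n + (m - n))%nat by lia. rewrite psum_add.
  replace (psum f n + psum (fun k => f (n + k)%nat) (m - n) - psum f n)%C
    with (psum (fun k => f (n + k)%nat) (m - n)) by ring.
  replace (M / (1 - r) * r ^ n) with (M * r ^ n / (1 - r)) by (field; lra).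
  apply psum_geom_bound; auto. intros k. rewrite Rmult_assoc, <- pow_add. apply H.
Qed.

Lemma is_series_C_geom (f : nat -> C) M r : 0 <= r < 1 ->
  (forall k, Cmod (f k) <= M * r ^ k) -> exists l, is_series_C f l.
Proof.
  intros Hr H. apply is_lim_C_cauchy. intros eps He.
  destruct (geom_eventually_small (M / (1 - r)) r eps Hr He) as [N HN].
  exists N. intros m n Hm Hn. destruct (Nat.le_ge_cases n m).
  - eapply Rle_lt_trans; [apply psum_tail_bound; eauto|]. auto.
  - rewrite Cmod_minus_sym. eapply Rle_lt_trans; [apply psum_tail_bound; eauto|]. auto.
Qed.

Lemma is_series_C_tail_bound (f : nat -> C) l M r n : 0 <= r < 1 ->
  (forall k, Cmod (f k) <= M * r ^ k) -> is_series_C f l ->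
  Cmod (l - psum f n) <= M / (1 - r) * r ^ n.
Proof.
  intros Hr H Hl. apply (is_lim_C_dist_le _ _ _ _ Hl). exists n. intros m Hm.
  apply psum_tail_bound; auto.
Qed.

Lemma is_series_C_bound (f : nat -> C) l M r : 0 <= r < 1 ->
  (forall k, Cmod (f k) <= M * r ^ k) -> is_series_C f l -> Cmod l <= M / (1 - r).
Proof.
  intros Hr H Hl. pose proof (is_series_C_tail_bound f l M r O Hr H Hl) as Ht.
  simpl in Ht. rewrite Cminus_0_r, Rmult_1_r in Ht. exact Ht.
Qed.

Lemma is_series_C_unique f l1 l2 : is_series_C f l1 -> is_series_C f l2 -> l1 = l2.
Proof. apply is_lim_C_unique. Qed.

Lemma is_series_C_ext f g a : (forall k, f k = g k) -> is_series_C f a -> is_series_C g a.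
Proof. intros E. apply is_lim_C_ext. intros; apply psum_ext; auto. Qed.

Lemma is_series_C_plus f g a b :
  is_series_C f a -> is_series_C g b -> is_series_C (fun k => f k + g k)%C (a + b)%C.
Proof.
  intros. eapply is_lim_C_ext; [intros; symmetry; apply psum_plus|]. apply is_lim_C_plus; auto.
Qed.

Lemma is_series_C_scal c f a : is_series_C f a -> is_series_C (fun k => c * f k)%C (c * a)%C.
Proof.
  intros. eapply is_lim_C_ext; [intros; symmetry; apply psum_scal|]. apply is_lim_C_scal; auto.
Qed.

Lemma is_series_C_shift f a : is_series_C f a -> is_series_C (fun k => f (S k)) (a - f O)%C.
Proof.
  intros H. eapply is_lim_C_ext.
  2: apply (is_lim_C_minus _ _ _ _ (is_lim_C_shift _ _ 1 H) (is_lim_C_const (f O))).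
  intros n. cbv beta. rewrite Nat.add_1_r, psum_succ_l. ring.
Qed.

Lemma is_lim_C_psum (a : nat -> nat -> C) (b : nat -> C) K :
  (forall k, is_lim_C (fun N => a N k) (b k)) -> is_lim_C (fun N => psum (a N) K) (psum b K).
Proof.
  intros H. induction K; simpl; [apply is_lim_C_const|]. apply is_lim_C_plus; auto.
Qed.

Lemma tannery (a : nat -> nat -> C) (b : nat -> C) (h : nat -> nat) M r l :
  0 <= r < 1 ->
  (forall k, is_lim_C (fun N => a N k) (b k)) ->
  (forall N k, Cmod (a N k) <= M * r ^ k) ->
  (forall N, exists P, forall n, (P <= n)%nat -> (N <= h n)%nat) ->
  is_series_C b l ->
  is_lim_C (fun N => psum (a N) (h N)) l.
Proof.
  intros Hr Hcv Ha Hh Hl.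
  assert (Hb : forall k, Cmod (b k) <= M * r ^ k).
  { intros k. rewrite <- (Cminus_0_r (b k)). apply (is_lim_C_dist_le _ _ 0 _ (Hcv k)).
    exists O. intros n _. rewrite Cminus_0_r. auto. }
  intros eps He.
  destruct (geom_eventually_small (M / (1 - r)) r (eps / 3) Hr ltac:(lra)) as [K HK].
  specialize (HK K (le_n _)).
  destruct (is_lim_C_psum a b K Hcv (eps / 3)) as [N1 HN1]; [lra|].
  destruct (Hh K) as [P HP].
  exists (N1 + P)%nat. intros n Hn.
  specialize (HN1 n ltac:(lia)). specialize (HP n ltac:(lia)).
  pose proof (psum_tail_bound (a n) M r K (h n) Hr HP (Ha n)) as Hta.
  pose proof (is_series_C_tail_bound b l M r K Hr Hb Hl) as Htb.
  replace (psum (a n) (h n) - l)%C with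
    ((psum (a n) (h n) - psum (a n) K) + (psum (a n) K - psum b K) + (psum b K - l))%C by ring.
  rewrite Cmod_minus_sym in Htb.
  pose proof (Cmod_triangle (psum (a n) (h n) - psum (a n) K + (psum (a n) K - psum b K))
    (psum b K - l)).
  pose proof (Cmod_triangle (psum (a n) (h n) - psum (a n) K) (psum (a n) K - psum b K)).
  lra.
Qed.

(** * q-Pochhammer symbols *)

Fixpoint pprod (f : nat -> C) (n : nat) : C :=
  match n with O => RtoC 1 | S k => (pprod f k * f k)%C end.

Definition qp (a b : C) (n : nat) : C := pprod (fun j => 1 - a * b ^ j)%C n.

Lemma qp_succ a b n : qp a b (S n) = (qp a b n * (1 - a * b ^ n))%C.
Proof. reflexivity. Qed.

Lemma qp_add a b n m : qp a b (n + m) = (qp a b n * qp (a * b ^ n) b m)%C.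
Proof.
  induction m.
  - rewrite Nat.add_0_r. unfold qp. simpl. ring.
  - rewrite Nat.add_succ_r, !qp_succ, IHm, Cpow_add_r. ring.
Qed.

Lemma exp_le_compat x y : x <= y -> exp x <= exp y.
Proof. intros [H|H]; [apply Rlt_le, exp_increasing; auto|subst; lra]. Qed.

Lemma exp_neg_le_one_minus (y rho : R) : 0 <= y <= rho -> rho < 1 ->
  exp (- (y / (1 - rho))) <= 1 - y.
Proof.
  intros Hy Hrho. apply Rle_trans with (exp (- (y / (1 - y)))).
  { apply exp_le_compat, Ropp_le_contravar. unfold Rdiv.
    apply Rmult_le_compat_l; [lra|]. apply Rinv_le_contravar; lra. }
  pose proof (exp_ineq1_le (y / (1 - y))) as H.
  replace (1 + y / (1 - y)) with (/ (1 - y)) in H by (field; lra).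
  rewrite exp_Ropp. replace (1 - y) with (/ / (1 - y)) at 2 by (field; lra).
  apply Rinv_le_contravar; [apply Rinv_0_lt_compat; lra|exact H].
Qed.

Definition qp_lower_bound (rho : R) : R := exp (- (rho / ((1 - rho) * (1 - rho)))).

Lemma qp_lower_bound_pos rho : 0 < qp_lower_bound rho.
Proof. apply exp_pos. Qed.

Section QPochhammerBounds.

Variables (a b : C) (rho : R).
Hypothesis Hrho : 0 <= rho < 1.
Hypothesis Ha : Cmod a <= rho.
Hypothesis Hb : Cmod b <= rho.

Lemma Cmod_qp_factor j : Cmod (a * b ^ j) <= rho ^ S j.
Proof.
  rewrite Cmod_mult, Cmod_pow. simpl. apply Rmult_le_compat; auto using Cmod_ge_0.
  - apply pow_le, Cmod_ge_0.
  - apply pow_incr. split; auto using Cmod_ge_0.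
Qed.

Lemma Cmod_qp_le n : Cmod (qp a b n) <= exp (rho / (1 - rho)).
Proof.
  assert (Hn : Cmod (qp a b n) <= exp (rho * (1 - rho ^ n) / (1 - rho))).
  { induction n.
    - unfold qp; simpl. rewrite Cmod_1.
      replace (rho * (1 - 1) / (1 - rho)) with 0 by (field; lra). rewrite exp_0. lra.
    - rewrite qp_succ, Cmod_mult.
      replace (rho * (1 - rho ^ S n) / (1 - rho))
        with (rho * (1 - rho ^ n) / (1 - rho) + rho ^ S n) by (simpl; field; lra).
      rewrite exp_plus. apply Rmult_le_compat; auto using Cmod_ge_0.
      eapply Rle_trans; [|apply exp_ineq1_le].
      pose proof (Cmod_qp_factor n). pose proof (Cmod_triangle 1 (- (a * b ^ n))).
      rewrite Cmod_opp, Cmod_1 in H0. unfold Cminus. lra. }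
  eapply Rle_trans; [exact Hn|]. apply exp_le_compat. unfold Rdiv.
  apply Rmult_le_compat_r; [apply Rlt_le, Rinv_0_lt_compat; lra|].
  pose proof (pow_le rho n ltac:(lra)). nra.
Qed.

Lemma Cmod_qp_ge n : qp_lower_bound rho <= Cmod (qp a b n).
Proof.
  assert (Hn : exp (- (rho * (1 - rho ^ n) / ((1 - rho) * (1 - rho)))) <= Cmod (qp a b n)).
  { induction n.
    - unfold qp; simpl. rewrite Cmod_1.
      replace (rho * (1 - 1) / ((1 - rho) * (1 - rho))) with 0 by (field; lra).
      rewrite Ropp_0, exp_0. lra.
    - rewrite qp_succ, Cmod_mult.
      replace (- (rho * (1 - rho ^ S n) / ((1 - rho) * (1 - rho)))) with
        (- (rho * (1 - rho ^ n) / ((1 - rho) * (1 - rho))) + - (rho ^ S n / (1 - rho)))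
        by (simpl; field; lra).
      rewrite exp_plus. apply Rmult_le_compat; auto; try (apply Rlt_le, exp_pos).
      pose proof (Cmod_qp_factor n) as Hf.
      assert (Hp : rho ^ S n <= rho)
        by (rewrite <- (pow_1 rho) at 2; apply pow_le_pow_of_le_1; lra || lia).
      pose proof (Cmod_ge_0 (a * b ^ n)).
      apply Rle_trans with (exp (- (Cmod (a * b ^ n) / (1 - rho)))).
      + apply exp_le_compat, Ropp_le_contravar. unfold Rdiv.
        apply Rmult_le_compat_r; [apply Rlt_le, Rinv_0_lt_compat; lra|exact Hf].
      + eapply Rle_trans; [apply (exp_neg_le_one_minus _ rho); lra|].
        apply Cmod_one_minus_ge. }
  eapply Rle_trans; [|exact Hn]. unfold qp_lower_bound. apply exp_le_compat, Ropp_le_contravar.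
  unfold Rdiv. apply Rmult_le_compat_r; [apply Rlt_le, Rinv_0_lt_compat; nra|].
  pose proof (pow_le rho n ltac:(lra)). nra.
Qed.

Lemma qp_neq0 n : qp a b n <> RtoC 0.
Proof.
  apply (Cmod_pos_neq0 _ (qp_lower_bound rho)); [apply qp_lower_bound_pos|apply Cmod_qp_ge].
Qed.

Lemma Cmod_inv_qp_le n : Cmod (/ qp a b n) <= / qp_lower_bound rho.
Proof. apply Cmod_inv_le; [apply qp_lower_bound_pos|apply Cmod_qp_ge]. Qed.

Lemma qp_cv : exists l, is_lim_C (qp a b) l /\ qp_lower_bound rho <= Cmod l.
Proof.
  set (d := fun j => (qp a b (S j) - qp a b j)%C).
  assert (Hd : forall j, Cmod (d j) <= (exp (rho / (1 - rho)) * rho) * rho ^ j).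
  { intros j. unfold d. rewrite qp_succ.
    replace (qp a b j * (1 - a * b ^ j) - qp a b j)%C with (- (qp a b j * (a * b ^ j)))%C
      by ring.
    rewrite Cmod_opp, Cmod_mult, Rmult_assoc.
    apply Rmult_le_compat; auto using Cmod_ge_0, Cmod_qp_le, Cmod_qp_factor. }
  destruct (is_series_C_geom d _ rho Hrho Hd) as [l Hl].
  assert (Hc : is_lim_C (qp a b) (1 + l)%C).
  { eapply is_lim_C_ext; [|apply (is_lim_C_plus _ _ _ _ (is_lim_C_const (RtoC 1)) Hl)].
    intros n. induction n; [unfold qp; simpl; ring|].
    simpl psum. rewrite Cplus_assoc, IHn. unfold d. ring. }
  exists (1 + l)%C. split; auto.
  apply (is_lim_C_Cmod_ge _ _ _ Hc). apply Cmod_qp_ge.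
Qed.

End QPochhammerBounds.

(** * Finite identities: q-binomial coefficients and Bailey pairs *)

Fixpoint tri (n : nat) : nat := match n with O => O | S k => (tri k + k)%nat end.

Lemma tri_add a b : tri (a + b) = (tri a + tri b + a * b)%nat.
Proof.
  induction b; simpl; [rewrite Nat.add_0_r; lia|].
  rewrite Nat.add_succ_r. simpl. rewrite IHb. nia.
Qed.

Lemma tri_double p : (2 * tri p + p = p * p)%nat.
Proof. induction p; simpl; nia. Qed.

Lemma m1_pow_sq k : ((-1) ^ k * (-1) ^ k)%C = RtoC 1.
Proof. rewrite <- Cpow_mult_l. replace (-1 * -1)%C with (RtoC 1) by ring. apply Cpow_1_l. Qed.

Section FiniteIdentities.

Variable q : C.
Hypothesis hq : Cmod q < 1.

Definition qq (n : nat) : C := qp q q n.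
Definition mq (n : nat) : C := qp (- q)%C q n.

Lemma Cmod_q_range : 0 <= Cmod q < 1.
Proof. split; [apply Cmod_ge_0|exact hq]. Qed.

Lemma qq_neq0 n : qq n <> RtoC 0.
Proof. apply (qp_neq0 _ _ (Cmod q)); auto using Cmod_q_range; lra. Qed.

Lemma mq_neq0 n : mq n <> RtoC 0.
Proof. apply (qp_neq0 _ _ (Cmod q)); auto using Cmod_q_range; [rewrite Cmod_opp|]; lra. Qed.

Lemma qq_0 : qq 0 = RtoC 1.
Proof. reflexivity. Qed.

Lemma mq_0 : mq 0 = RtoC 1.
Proof. reflexivity. Qed.

Lemma qq_succ n : qq (S n) = (qq n * (1 - q ^ S n))%C.
Proof. reflexivity. Qed.

Lemma mq_succ n : mq (S n) = (mq n * (1 + q ^ S n))%C.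
Proof. unfold mq. rewrite qp_succ. simpl. ring. Qed.

Lemma Cmod_qpow_lt_1 k : (1 <= k)%nat -> Cmod (q ^ k) < 1.
Proof. intros Hk. rewrite Cmod_pow. apply pow_lt_1_compat; [apply Cmod_q_range|lia]. Qed.

Lemma one_minus_qpow_neq0 k : (1 <= k)%nat -> (1 - q ^ k)%C <> RtoC 0.
Proof.
  intros Hk. apply (Cmod_pos_neq0 _ (1 - Cmod (q ^ k))).
  - pose proof (Cmod_qpow_lt_1 k Hk). lra.
  - apply Cmod_one_minus_ge.
Qed.

Lemma one_plus_qpow_neq0 k : (1 + q ^ k)%C <> RtoC 0.
Proof.
  destruct k.
  - intros E. apply (f_equal fst) in E. simpl in E. lra.
  - replace (1 + q ^ S k)%C with (1 - - q ^ S k)%C by ring.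
    apply (Cmod_pos_neq0 _ (1 - Cmod (- q ^ S k))); [|apply Cmod_one_minus_ge].
    rewrite Cmod_opp. pose proof (Cmod_qpow_lt_1 (S k) ltac:(lia)). lra.
Qed.

Fixpoint qbinom (M k : nat) : C :=
  match M, k with
  | _, O => RtoC 1
  | O, S _ => RtoC 0
  | S M', S k' => (qbinom M' (S k') + q ^ (M' - k') * qbinom M' k')%C
  end.

Lemma qbinom_gt M k : (M < k)%nat -> qbinom M k = RtoC 0.
Proof.
  revert k. induction M; intros k Hk; destruct k; try lia; simpl; auto.
  rewrite !IHM by lia. ring.
Qed.

Lemma qbinom_0 M : qbinom M 0 = RtoC 1.
Proof. destruct M; reflexivity. Qed.

Lemma qbinom_formula M k : (k <= M)%nat -> qbinom M k = (qq M / (qq k * qq (M - k)))%C.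
Proof.
  revert k. induction M; intros k Hk.
  - destruct k; [|lia]. simpl. rewrite qq_0. field.
  - destruct k.
    + rewrite qbinom_0, Nat.sub_0_r, qq_0. pose proof (qq_neq0 (S M)). field_hyps.
    + simpl qbinom. destruct (Nat.eq_dec k M).
      * subst. rewrite qbinom_gt, IHM, !Nat.sub_diag by lia.
        rewrite qq_0. pose proof (qq_neq0 M). pose proof (qq_neq0 (S M)). simpl. field_hyps.
      * rewrite !IHM by lia.
        remember (M - S k)%nat as j.
        replace (M - k)%nat with (S j) by lia. replace (S M - S k)%nat with (S j) by lia.
        replace M with (k + S j)%nat by lia.
        rewrite (qq_succ k), (qq_succ j), (qq_succ (k + S j)).
        replace (q ^ S (k + S j))%C with (q ^ S k * q ^ S j)%C
          by (rewrite <- Cpow_add_r; f_equal; lia).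
        pose proof (qq_neq0 k). pose proof (qq_neq0 j). pose proof (qq_neq0 (k + S j)).
        pose proof (one_minus_qpow_neq0 (S k) ltac:(lia)).
        pose proof (one_minus_qpow_neq0 (S j) ltac:(lia)).
        field_hyps.
Qed.

Lemma qbinom_sym M k : (k <= M)%nat -> qbinom M (M - k) = qbinom M k.
Proof.
  intros Hk. rewrite !qbinom_formula by lia. replace (M - (M - k))%nat with k by lia.
  pose proof (qq_neq0 k). pose proof (qq_neq0 (M - k)). field_hyps.
Qed.

Lemma psum_qbinom_succ (F : nat -> C) M :
  psum (fun k => qbinom (S M) k * F k)%C (S (S M)) =
  (psum (fun k => qbinom M k * F k)%C (S M) +
   psum (fun k => q ^ (M - k) * qbinom M k * F (S k))%C (S M))%C.
Proof.
  rewrite psum_succ_l, (psum_succ_l (fun k => qbinom M k * F k)%C).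
  replace (psum (fun k => qbinom (S M) (S k) * F (S k))%C (S M)) with
    (psum (fun k => qbinom M (S k) * F (S k))%C (S M) +
     psum (fun k => q ^ (M - k) * qbinom M k * F (S k))%C (S M))%C
    by (rewrite <- psum_plus; apply psum_ext; intros k _; simpl; ring).
  change (psum (fun k => qbinom M (S k) * F (S k))%C (S M)) with
    (psum (fun k => qbinom M (S k) * F (S k))%C M + qbinom M (S M) * F (S M))%C.
  rewrite (qbinom_gt M (S M)), !qbinom_0 by lia. ring.
Qed.

Lemma qbinom_unit_sum M a :
  psum (fun k => qbinom M k * (q ^ (k * k) * a ^ k * qp (a * q ^ S k) q (M - k)))%C (S M)
  = RtoC 1.
Proof.
  revert a. induction M; intros a; [unfold qp; simpl; ring|].
  rewrite psum_qbinom_succ.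
  replace (psum (fun k => qbinom M k *
             (q ^ (k * k) * a ^ k * qp (a * q ^ S k) q (S M - k)))%C (S M))
    with ((1 - a * q ^ S M) * psum (fun k => qbinom M k *
             (q ^ (k * k) * a ^ k * qp (a * q ^ S k) q (M - k)))%C (S M))%C.
  2:{ rewrite <- psum_scal. apply psum_ext. intros k Hk.
      replace (S M - k)%nat with (S (M - k)) by lia. rewrite qp_succ.
      replace (a * q ^ S k * q ^ (M - k))%C with (a * q ^ S M)%C; [ring|].
      rewrite <- Cmult_assoc, <- Cpow_add_r. do 2 f_equal. lia. }
  replace (psum (fun k => q ^ (M - k) * qbinom M k *
             (q ^ (S k * S k) * a ^ S k * qp (a * q ^ S (S k)) q (S M - S k)))%C (S M))
    with (a * q ^ S M * psum (fun k => qbinom M k *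
             (q ^ (k * k) * (a * q) ^ k * qp (a * q * q ^ S k) q (M - k)))%C (S M))%C.
  2:{ rewrite <- psum_scal. apply psum_ext. intros k Hk.
      replace (S M - S k)%nat with (M - k)%nat by lia.
      replace (a * q ^ S (S k))%C with (a * q * q ^ S k)%C by (rewrite (Cpow_S q (S k)); ring).
      replace (q ^ (M - k) * qbinom M k *
               (q ^ (S k * S k) * a ^ S k * qp (a * q * q ^ S k) q (M - k)))%C
        with ((q ^ (M - k) * q ^ (S k * S k)) *
              (qbinom M k * (a * a ^ k) * qp (a * q * q ^ S k) q (M - k)))%C
        by (rewrite (Cpow_S a k); ring).
      replace (q ^ (M - k) * q ^ (S k * S k))%C with (q ^ S M * q ^ (k * k) * q ^ k)%C
        by (rewrite <- !Cpow_add_r; f_equal; nia).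
      rewrite Cpow_mult_l. ring. }
  rewrite !IHM. ring.
Qed.

Definition rothe_term (m : nat) (z : C) (k : nat) : C :=
  (qbinom m k * ((-1) ^ k * q ^ tri k * z ^ k))%C.

Lemma qbinom_rothe m z : psum (rothe_term m z) (S m) = qp z q m.
Proof.
  unfold rothe_term. induction m; [unfold qp; simpl; ring|].
  rewrite psum_qbinom_succ, IHm, qp_succ.
  replace (psum (fun k => q ^ (m - k) * qbinom m k *
                          ((-1) ^ S k * q ^ tri (S k) * z ^ S k))%C (S m))
    with (- z * q ^ m * psum (fun k => qbinom m k * ((-1) ^ k * q ^ tri k * z ^ k))%C (S m))%C.
  - rewrite IHm. ring.
  - rewrite <- psum_scal. apply psum_ext. intros k Hk. simpl tri.
    replace (q ^ m)%C with (q ^ (m - k) * q ^ k)%C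
      by (rewrite <- Cpow_add_r; f_equal; lia).
    rewrite Cpow_add_r, !Cpow_S. ring.
Qed.

Section RotheAtInversePower.

Variables (n : nat) (z : C).
Hypothesis Hzq : (z * q ^ n)%C = RtoC 1.

Lemma qpow_tri_mul_inv_pow k e : (tri (S n) + tri k = e + n * k)%nat ->
  (q ^ tri (S n) * (q ^ tri k * z ^ k) = q ^ e)%C.
Proof.
  intros He. rewrite Cmult_assoc, <- Cpow_add_r, He, Cpow_add_r, Cpow_mult_r.
  transitivity (q ^ e * (z * q ^ n) ^ k)%C; [rewrite Cpow_mult_l; ring|].
  rewrite Hzq, Cpow_1_l. ring.
Qed.

Let w : C := ((-1) ^ n * q ^ tri (S n))%C.

Lemma rothe_term_center : (w * rothe_term (2 * n) z n)%C = qbinom (2 * n) n.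
Proof.
  unfold w, rothe_term.
  transitivity (((-1) ^ n * (-1) ^ n) * qbinom (2 * n) n *
                (q ^ tri (S n) * (q ^ tri n * z ^ n)))%C; [ring|].
  rewrite m1_pow_sq, (qpow_tri_mul_inv_pow n 0); [simpl; ring|].
  pose proof (tri_double n). simpl. nia.
Qed.

Lemma rothe_term_reflect s : (1 <= s <= n)%nat ->
  (w * (rothe_term (2 * n) z (n + s) + rothe_term (2 * n) z (n - s)))%C =
  ((-1) ^ s * q ^ tri s * (1 + q ^ s) * qbinom (2 * n) (n + s))%C.
Proof.
  intros Hs. unfold w, rothe_term.
  replace (qbinom (2 * n) (n - s)) with (qbinom (2 * n) (n + s))
    by (rewrite <- qbinom_sym by lia; f_equal; lia).
  assert (E1 : (q ^ tri (S n) * (q ^ tri (n + s) * z ^ (n + s)))%C = (q ^ tri s)%C).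
  { apply qpow_tri_mul_inv_pow. rewrite tri_add. pose proof (tri_double n). simpl. nia. }
  assert (E2 : (q ^ tri (S n) * (q ^ tri (n - s) * z ^ (n - s)))%C = (q ^ tri s * q ^ s)%C).
  { rewrite <- Cpow_add_r. apply qpow_tri_mul_inv_pow.
    remember (n - s)%nat as p. replace n with (p + s)%nat by lia.
    change (tri (S (p + s))) with (tri (p + s) + (p + s))%nat. rewrite tri_add.
    pose proof (tri_double p). nia. }
  assert (S1 : ((-1) ^ n * (-1) ^ (n + s))%C = ((-1) ^ s)%C)
    by (rewrite Cpow_add_r, Cmult_assoc, m1_pow_sq; ring).
  assert (S2 : ((-1) ^ n * (-1) ^ (n - s))%C = ((-1) ^ s)%C).
  { replace n with ((n - s) + s)%nat at 1 by lia. rewrite Cpow_add_r.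
    transitivity ((-1) ^ (n - s) * (-1) ^ (n - s) * (-1) ^ s)%C; [ring|].
    rewrite m1_pow_sq. ring. }
  transitivity (qbinom (2 * n) (n + s) *
    (((-1) ^ n * (-1) ^ (n + s)) * (q ^ tri (S n) * (q ^ tri (n + s) * z ^ (n + s))) +
     ((-1) ^ n * (-1) ^ (n - s)) * (q ^ tri (S n) * (q ^ tri (n - s) * z ^ (n - s)))))%C;
    [ring|].
  rewrite E1, E2, S1, S2. ring.
Qed.

End RotheAtInversePower.

Definition kappa (r : nat) : C := (4 * q ^ r / (1 + q ^ r) ^ 2)%C.

Definition bailey_kernel (n r : nat) : C := (/ (qq (n - r) * qq (n + r)))%C.

Definition bailey_pair (alpha beta : nat -> C) : Prop :=
  forall n, psum (fun r => alpha r * bailey_kernel n r)%C (S n) = beta n.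

(* The factor 1/2 at r = 0 makes alpha_0 = 1. *)
Definition unit_alpha (r : nat) : C :=
  ((match r with O => RtoC (1/2) | _ => RtoC 1 end) * (-1) ^ r * q ^ tri r * (1 + q ^ r))%C.

Definition unit_beta (j : nat) : C := match j with O => RtoC 1 | _ => RtoC 0 end.

Lemma unit_alpha_0 : unit_alpha 0 = RtoC 1.
Proof. unfold unit_alpha. simpl. apply injective_projections; simpl; field. Qed.

Lemma unit_alpha_qbinom_sum n : (1 <= n)%nat -> q <> RtoC 0 ->
  psum (fun r => unit_alpha r * qbinom (2 * n) (n + r))%C (S n) = RtoC 0.
Proof.
  intros Hn Hq0. set (z := (/ q ^ n)%C).
  assert (Hzq : (z * q ^ n)%C = RtoC 1) by (unfold z; field; apply Cpow_nz; auto).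
  assert (Hroot : qp z q (2 * n) = RtoC 0).
  { replace (2 * n)%nat with (n + (1 + (n - 1)))%nat by lia. rewrite !qp_add, Hzq.
    unfold qp at 2. simpl. ring. }
  pose proof (qbinom_rothe (2 * n) z) as HR.
  rewrite Hroot in HR. replace (S (2 * n)) with (2 * n + 1)%nat in HR by lia.
  rewrite psum_fold_center in HR.
  rewrite psum_succ_l, unit_alpha_0, Nat.add_0_r, <- (rothe_term_center n z Hzq).
  transitivity (((-1) ^ n * q ^ tri (S n)) * (rothe_term (2 * n) z n +
    psum (fun r => rothe_term (2 * n) z (n + 1 + r) + rothe_term (2 * n) z (n - 1 - r)) n))%C.
  - rewrite Cmult_plus_distr_l, <- psum_scal. f_equal; [ring|].
    apply psum_ext. intros r Hr.
    replace (n + 1 + r)%nat with (n + S r)%nat by lia.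
    replace (n - 1 - r)%nat with (n - S r)%nat by lia.
    rewrite (rothe_term_reflect n z Hzq (S r)) by lia. unfold unit_alpha. ring.
  - rewrite HR. ring.
Qed.

Lemma unit_bailey_pair : bailey_pair unit_alpha unit_beta.
Proof.
  intros [|n].
  - simpl. unfold bailey_kernel. simpl. rewrite unit_alpha_0, qq_0. field.
  - simpl unit_beta. destruct (Ceq_dec q 0) as [Hq0|Hq0].
    + assert (HQ : forall k, qq k = RtoC 1).
      { induction k; [reflexivity|]. rewrite qq_succ, IHk, Hq0, Cpow_S. ring. }
      rewrite psum_succ_l, psum_succ_l.
      rewrite (psum_ext _ (fun _ => RtoC 0)), psum_zero.
      * unfold unit_alpha, bailey_kernel. rewrite !HQ, Hq0. simpl.
        apply injective_projections; simpl; field.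
      * intros k _. unfold unit_alpha. simpl tri.
        replace (tri k + k + S k)%nat with (S (tri k + k + k)) by lia.
        rewrite Hq0, (Cpow_S 0 (tri k + k + k)). ring.
    + rewrite <- (Cmult_0_r (/ qq (2 * S n))).
      rewrite <- (unit_alpha_qbinom_sum (S n) ltac:(lia) Hq0), <- psum_scal.
      apply psum_ext. intros r Hr. rewrite qbinom_formula by lia.
      unfold bailey_kernel. replace (2 * S n - (S n + r))%nat with (S n - r)%nat by lia.
      pose proof (qq_neq0 (S n + r)). pose proof (qq_neq0 (S n - r)).
      pose proof (qq_neq0 (2 * S n)). field_hyps.
Qed.

Lemma kappa_0 : kappa 0 = RtoC 1.
Proof. unfold kappa. simpl. apply injective_projections; simpl; field. Qed.

Lemma psum_unit_beta (X : nat -> C) n : psum (fun j => X j * unit_beta j)%C (S n) = X O.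
Proof.
  rewrite psum_succ_l, (psum_ext _ (fun _ => RtoC 0)), psum_zero; [simpl; ring|].
  intros. simpl. ring.
Qed.

Lemma kappa_partial_sum r m :
  psum (fun i => kappa (r + i) * mq (r + i) ^ 2 / (qq i * qq (2 * r + i)))%C (S m) =
  (kappa r * mq (r + m) ^ 2 / (qq m * qq (2 * r + m)))%C.
Proof.
  induction m.
  - change (psum ?f 1) with (RtoC 0 + f O)%C. cbv beta. rewrite !Nat.add_0_r, qq_0.
    pose proof (qq_neq0 (2 * r)). field_hyps.
  - change (psum ?f (S (S m))) with (psum f (S m) + f (S m))%C. rewrite IHm. cbv beta.
    unfold kappa. rewrite !Nat.add_succ_r, !qq_succ, !mq_succ.
    replace (2 * r)%nat with (r + r)%nat by lia.
    pose proof (qq_neq0 m). pose proof (qq_neq0 (r + r + m)). pose proof (mq_neq0 (r + m)).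
    pose proof (one_plus_qpow_neq0 r).
    pose proof (one_minus_qpow_neq0 (S m) ltac:(lia)).
    pose proof (one_minus_qpow_neq0 (S (r + r + m)) ltac:(lia)).
    pose proof (one_plus_qpow_neq0 (S (r + m))).
    rewrite !Cpow_S, !Cpow_add_r in *. field_hyps.
Qed.

Lemma square_partial_sum r m :
  psum (fun i => q ^ ((r + i) * (r + i)) / (qq i * qq (2 * r + i) * qq (m - i)))%C (S m) =
  (q ^ (r * r) / (qq m * qq (2 * r + m)))%C.
Proof.
  rewrite <- (Cmult_1_r (q ^ (r * r) / (qq m * qq (2 * r + m)))).
  rewrite <- (qbinom_unit_sum m (q ^ (2 * r))), <- psum_scal.
  apply psum_ext. intros k Hk. rewrite qbinom_formula by lia.
  assert (Hs : qp (q ^ (2 * r) * q ^ S k) q (m - k) = (qq (2 * r + m) / qq (2 * r + k))%C).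
  { replace (2 * r + m)%nat with ((2 * r + k) + (m - k))%nat by lia.
    unfold qq. rewrite qp_add.
    replace (q * q ^ (2 * r + k))%C with (q ^ (2 * r) * q ^ S k)%C
      by (rewrite Cpow_add_r, Cpow_S; ring).
    pose proof (qq_neq0 (2 * r + k)). unfold qq in *. field_hyps. }
  rewrite Hs, <- Cpow_mult_r.
  replace (q ^ ((r + k) * (r + k)))%C with (q ^ (r * r) * (q ^ (k * k) * q ^ (2 * r * k)))%C
    by (rewrite <- !Cpow_add_r; f_equal; nia).
  pose proof (qq_neq0 m). pose proof (qq_neq0 k). pose proof (qq_neq0 (m - k)).
  pose proof (qq_neq0 (2 * r + k)). pose proof (qq_neq0 (2 * r + m)). field_hyps.
Qed.

(* Bailey's lemma for a = 1 and rho1 = rho2 = -1, where the factor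
   (rho1)_r (rho2)_r q^r / ((q/rho1)_r (q/rho2)_r) becomes kappa r. *)
Lemma bailey_lemma_kappa alpha beta : bailey_pair alpha beta ->
  bailey_pair (fun r => kappa r * alpha r)%C
              (fun n => psum (fun j => kappa j * mq j ^ 2 * beta j)%C (S n) / mq n ^ 2)%C.
Proof.
  intros Hp n. pose proof (mq_neq0 n).
  transitivity (psum (fun j => psum (fun r => kappa j * mq j ^ 2 * (alpha r * bailey_kernel j r))
                                    (S j))%C (S n) / mq n ^ 2)%C.
  2:{ f_equal. apply psum_ext. intros j _. rewrite psum_scal, Hp. reflexivity. }
  rewrite psum_triangle_swap.
  transitivity (psum (fun r => psum (fun i => kappa (r + i) * mq (r + i) ^ 2 /
     (qq i * qq (2 * r + i)))%C (S (n - r)) * alpha r / mq n ^ 2)%C (S n)).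
  - apply psum_ext. intros r Hr. rewrite kappa_partial_sum.
    replace (r + (n - r))%nat with n by lia.
    replace (2 * r + (n - r))%nat with (n + r)%nat by lia.
    pose proof (qq_neq0 (n - r)). pose proof (qq_neq0 (n + r)).
    unfold bailey_kernel. field_hyps.
  - unfold Cdiv. rewrite (Cmult_comm _ (/ mq n ^ 2)), <- psum_scal.
    apply psum_ext. intros r _.
    match goal with |- (?A * ?B * ?D)%C = _ => transitivity (D * (B * A))%C; [ring|] end.
    rewrite <- !psum_scal. apply psum_ext. intros i _. unfold bailey_kernel.
    replace (r + i - r)%nat with i by lia. replace (r + i + r)%nat with (2 * r + i)%nat by lia.
    ring.
Qed.

(* Bailey's lemma in the limit rho1, rho2 -> oo, truncated at N. *)
Lemma bailey_lemma_limit alpha beta : bailey_pair alpha beta -> forall N,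
  psum (fun j => q ^ (j * j) * beta j / qq (N - j))%C (S N) =
  psum (fun r => alpha r * q ^ (r * r) * bailey_kernel N r)%C (S N).
Proof.
  intros Hp N.
  transitivity (psum (fun j => psum (fun r => q ^ (j * j) / qq (N - j) *
                                    (alpha r * bailey_kernel j r)) (S j))%C (S N)).
  { apply psum_ext. intros j _. rewrite psum_scal, Hp. unfold Cdiv. ring. }
  rewrite psum_triangle_swap. apply psum_ext. intros r Hr.
  transitivity (alpha r * psum (fun i => q ^ ((r + i) * (r + i)) /
     (qq i * qq (2 * r + i) * qq (N - r - i)))%C (S (N - r)))%C.
  - rewrite <- psum_scal. apply psum_ext. intros i Hi. unfold bailey_kernel.
    replace (r + i - r)%nat with i by lia. replace (r + i + r)%nat with (2 * r + i)%nat by lia.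
    replace (N - (r + i))%nat with (N - r - i)%nat by lia.
    pose proof (qq_neq0 i). pose proof (qq_neq0 (2 * r + i)). pose proof (qq_neq0 (N - r - i)).
    field_hyps.
  - rewrite square_partial_sum. replace (2 * r + (N - r))%nat with (N + r)%nat by lia.
    unfold bailey_kernel, Cdiv. ring.
Qed.

Lemma kappa_bailey_pair :
  bailey_pair (fun r => kappa r * unit_alpha r)%C (fun n => / mq n ^ 2)%C.
Proof.
  intros n. rewrite (bailey_lemma_kappa _ _ unit_bailey_pair n), psum_unit_beta.
  rewrite kappa_0, mq_0. unfold Cdiv. ring.
Qed.

Lemma inv_qq_expansion N :
  psum (fun r => unit_alpha r * q ^ (r * r) * bailey_kernel N r)%C (S N) = (/ qq N)%C.
Proof.
  rewrite <- (bailey_lemma_limit _ _ unit_bailey_pair N).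
  rewrite (psum_ext _ (fun j => (q ^ (j * j) / qq (N - j)) * unit_beta j)%C)
    by (intros; unfold Cdiv; ring).
  rewrite psum_unit_beta, Nat.sub_0_r. simpl. unfold Cdiv. ring.
Qed.

End FiniteIdentities.

(** * Passage to the limit *)

Section Limits.

Variable q : C.
Hypothesis hq : Cmod q < 1.

Let rho := Cmod q.
Let L := qp_lower_bound rho.

Let rho_range : 0 <= rho < 1 := Cmod_q_range q hq.

Let L_pos : 0 < L := qp_lower_bound_pos rho.

Lemma Cmod_qpow_le e k : (k <= e)%nat -> Cmod (q ^ e) <= rho ^ k.
Proof. intros. rewrite Cmod_pow. apply pow_le_pow_of_le_1; auto. lra. Qed.

Lemma Cmod_one_plus_qpow_ge k : 1 - rho <= Cmod (1 + q ^ k).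
Proof.
  destruct k.
  - replace (1 + q ^ 0)%C with (RtoC 2) by (simpl; apply injective_projections; simpl; ring).
    rewrite Cmod_R, Rabs_pos_eq; lra.
  - replace (1 + q ^ S k)%C with (1 - - q ^ S k)%C by ring.
    eapply Rle_trans; [|apply Cmod_one_minus_ge]. rewrite Cmod_opp.
    pose proof (Cmod_qpow_le (S k) 1 ltac:(lia)). rewrite pow_1 in H. lra.
Qed.

Lemma Cmod_one_plus_qpow_le k : Cmod (1 + q ^ k) <= 2.
Proof.
  eapply Rle_trans; [apply Cmod_triangle|]. rewrite Cmod_1.
  pose proof (Cmod_qpow_le k 0 ltac:(lia)). simpl in H. lra.
Qed.

Lemma Cmod_inv_one_plus_qpow_le k : Cmod (/ (1 + q ^ k)) <= / (1 - rho).
Proof. apply Cmod_inv_le; [lra|apply Cmod_one_plus_qpow_ge]. Qed.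

Lemma Cmod_inv_sq_le (z : C) : L <= Cmod z -> Cmod (/ z ^ 2) <= / L * / L.
Proof.
  intros H. assert (z <> RtoC 0) by (apply (Cmod_pos_neq0 _ L); auto).
  replace (/ z ^ 2)%C with (/ z * / z)%C by (field; auto).
  rewrite Cmod_mult. pose proof (Cmod_inv_le z L L_pos H). pose proof (Cmod_ge_0 (/ z)).
  apply Rmult_le_compat; auto.
Qed.

Lemma Cmod_qq_ge n : L <= Cmod (qq q n).
Proof. apply Cmod_qp_ge; auto; unfold rho; lra. Qed.

Lemma Cmod_mq_ge n : L <= Cmod (mq q n).
Proof. apply Cmod_qp_ge; auto; [rewrite Cmod_opp|]; unfold rho; lra. Qed.

Definition heine_term (x : C) (k : nat) : C := (x ^ k / qp x q k)%C.

Definition heine_shift_term (x : C) (k : nat) : C := (x ^ k / qp (x * q) q k)%C.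

Section HeineStep.

Variable x : C.
Hypothesis Hx : Cmod x <= rho.

Lemma Cmod_mul_q_le : Cmod (x * q) <= rho.
Proof. rewrite Cmod_mult. pose proof (Cmod_ge_0 x). pose proof rho_range. fold rho. nra. Qed.

Lemma one_minus_neq0_of_Cmod_le : (1 - x)%C <> RtoC 0.
Proof. apply (Cmod_pos_neq0 _ (1 - Cmod x)); [lra|apply Cmod_one_minus_ge]. Qed.

Lemma heine_term_bound k : Cmod (heine_term x k) <= / L * rho ^ k.
Proof.
  unfold heine_term, Cdiv. rewrite Cmod_mult, Cmod_pow, Rmult_comm.
  apply Rmult_le_compat; auto using Cmod_ge_0, pow_le.
  - apply Cmod_inv_qp_le; auto. unfold rho; lra.
  - apply pow_incr. split; auto using Cmod_ge_0.
Qed.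

Lemma heine_shift_term_bound k : Cmod (heine_shift_term x k) <= / L * rho ^ k.
Proof.
  unfold heine_shift_term, Cdiv. rewrite Cmod_mult, Cmod_pow, Rmult_comm.
  apply Rmult_le_compat; auto using Cmod_ge_0, pow_le.
  - apply Cmod_inv_qp_le; auto using Cmod_mul_q_le. unfold rho; lra.
  - apply pow_incr. split; auto using Cmod_ge_0.
Qed.

Lemma heine_term_succ k :
  heine_term x (S k) = (x / (1 - x) * heine_shift_term x k)%C.
Proof.
  unfold heine_term, heine_shift_term.
  replace (qp x q (S k)) with ((1 - x) * qp (x * q) q k)%C.
  - pose proof one_minus_neq0_of_Cmod_le.
    pose proof (qp_neq0 (x * q) q rho rho_range Cmod_mul_q_le ltac:(unfold rho; lra) k).
    rewrite Cpow_S. field_hyps.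
  - change (S k) with (1 + k)%nat. rewrite qp_add, Cpow_1_r. f_equal.
    unfold qp. simpl. ring.
Qed.

Lemma heine_shift_term_succ k :
  heine_shift_term x (S k) = (x * heine_shift_term x k + x * heine_term (x * q) (S k))%C.
Proof.
  unfold heine_shift_term, heine_term. rewrite !qp_succ.
  pose proof (qp_neq0 (x * q) q rho rho_range Cmod_mul_q_le ltac:(unfold rho; lra) (S k))
    as Hnz.
  rewrite qp_succ in Hnz.
  assert (qp (x * q) q k <> RtoC 0)
    by (apply (qp_neq0 _ _ rho); auto using Cmod_mul_q_le; unfold rho; lra).
  assert ((1 - x * q * q ^ k)%C <> RtoC 0) by (intros E; apply Hnz; rewrite E; ring).
  rewrite Cpow_mult_l, !Cpow_S. field_hyps.
Qed.

Lemma heine_series_step A A' : is_series_C (heine_term x) A ->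
  is_series_C (heine_term (x * q)) A' ->
  A = (1 / (1 - x) + x ^ 2 / (1 - x) ^ 2 * A')%C.
Proof.
  intros HA HA'. pose proof one_minus_neq0_of_Cmod_le.
  destruct (is_series_C_geom _ _ rho rho_range heine_shift_term_bound) as [B HB].
  assert (EA : (A - 1 = x / (1 - x) * B)%C).
  { replace (RtoC 1) with (heine_term x 0) at 1 by (unfold heine_term, qp; simpl; field).
    apply (is_series_C_unique _ _ _ (is_series_C_shift _ _ HA)).
    eapply is_series_C_ext; [|apply is_series_C_scal, HB].
    intros k. symmetry. apply heine_term_succ. }
  assert (EB : (B - 1 = x * B + x * (A' - 1))%C).
  { replace (RtoC 1) with (heine_shift_term x 0) at 1
      by (unfold heine_shift_term, qp; simpl; field).
    replace (RtoC 1) with (heine_term (x * q) 0) by (unfold heine_term, qp; simpl; field).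
    apply (is_series_C_unique _ _ _ (is_series_C_shift _ _ HB)).
    eapply is_series_C_ext; [|apply is_series_C_plus;
      [apply is_series_C_scal, HB|apply is_series_C_scal, is_series_C_shift, HA']].
    intros k. symmetry. apply heine_shift_term_succ. }
  assert (EB' : B = ((1 - x + x * A') / (1 - x))%C).
  { assert (E : (B * (1 - x) = 1 - x + x * A')%C).
    { transitivity ((B - 1 - (x * B + x * (A' - 1))) + (1 - x + x * A'))%C; [ring|].
      rewrite EB. ring. }
    rewrite <- E. field. auto. }
  replace A with (A - 1 + 1)%C by ring. rewrite EA, EB'. field. auto.
Qed.

End HeineStep.

Definition mq_alt_term (k : nat) : C := ((- q) ^ k / mq q k)%C.
Definition sq_term (n : nat) : C := (q ^ (n * n) / mq q n ^ 2)%C.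
Definition tele_term (n : nat) : C := (q ^ (n * S n) / (mq q n * mq q (S n)))%C.

Lemma Cmod_neg_qpow_le n : Cmod (- q ^ S n) <= rho.
Proof.
  rewrite Cmod_opp. pose proof (Cmod_qpow_le (S n) 1 ltac:(lia)). rewrite pow_1 in H. auto.
Qed.

Lemma heine_term_neg_q k : heine_term (- q ^ 1) k = mq_alt_term k.
Proof. unfold heine_term, mq_alt_term, mq. rewrite Cpow_1_r. reflexivity. Qed.

Lemma mq_alt_term_bound k : Cmod (mq_alt_term k) <= / L * rho ^ k.
Proof. rewrite <- heine_term_neg_q. apply heine_term_bound, Cmod_neg_qpow_le. Qed.

Lemma sq_term_bound k : Cmod (sq_term k) <= / L * / L * rho ^ k.
Proof.
  unfold sq_term, Cdiv. rewrite Cmod_mult, Rmult_comm.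
  apply Rmult_le_compat; auto using Cmod_ge_0.
  - apply Cmod_inv_sq_le, Cmod_mq_ge.
  - apply Cmod_qpow_le. nia.
Qed.

Lemma heine_iterate N G v : is_series_C mq_alt_term G ->
  is_series_C (heine_term (- q ^ S N)) v ->
  G = (psum tele_term N + q ^ (N * S N) / mq q N ^ 2 * v)%C.
Proof.
  revert G v. induction N; intros G v HG Hv.
  - simpl. rewrite mq_0.
    apply (is_series_C_ext _ mq_alt_term) in Hv; [|apply heine_term_neg_q].
    rewrite (is_series_C_unique _ _ _ HG Hv). field.
  - destruct (is_series_C_geom _ _ rho rho_range (heine_term_bound _ (Cmod_neg_qpow_le N)))
      as [v0 Hv0].
    rewrite (IHN G v0 HG Hv0).
    assert (Hv' : is_series_C (heine_term (- q ^ S N * q)) v)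
      by (replace (- q ^ S N * q)%C with (- q ^ S (S N))%C by (rewrite (Cpow_S q (S N)); ring);
          exact Hv).
    rewrite (heine_series_step _ (Cmod_neg_qpow_le N) v0 v Hv0 Hv').
    change (psum tele_term (S N)) with (psum tele_term N + tele_term N)%C.
    unfold tele_term. rewrite mq_succ.
    replace (q ^ (S N * S (S N)))%C with (q ^ (N * S N) * (q ^ S N * q ^ S N))%C
      by (rewrite <- !Cpow_add_r; f_equal; nia).
    pose proof (mq_neq0 q hq N). pose proof (one_plus_qpow_neq0 q hq (S N)).
    replace (1 - - q ^ S N)%C with (1 + q ^ S N)%C by ring. field_hyps.
Qed.

Lemma is_series_C_tele_term G : is_series_C mq_alt_term G -> is_series_C tele_term G.
Proof.
  intros HG. apply (is_lim_C_geom _ _ (/ L * / L * (/ L / (1 - rho))) rho); auto.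
  intros n.
  destruct (is_series_C_geom _ _ rho rho_range (heine_term_bound _ (Cmod_neg_qpow_le n)))
    as [v Hv].
  rewrite (heine_iterate n G v HG Hv).
  replace (psum tele_term n - (psum tele_term n + q ^ (n * S n) / mq q n ^ 2 * v))%C
    with (- (q ^ (n * S n) / mq q n ^ 2 * v))%C by ring.
  rewrite Cmod_opp, Cmod_mult.
  assert (HD : Cmod (q ^ (n * S n) / mq q n ^ 2) <= / L * / L * rho ^ n).
  { unfold Cdiv. rewrite Cmod_mult, Rmult_comm. apply Rmult_le_compat; auto using Cmod_ge_0.
    - apply Cmod_inv_sq_le, Cmod_mq_ge.
    - apply Cmod_qpow_le. nia. }
  assert (Hvb : Cmod v <= / L / (1 - rho))
    by (apply (is_series_C_bound (heine_term (- q ^ S n)) v (/ L) rho rho_range); auto;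
        intros; apply heine_term_bound, Cmod_neg_qpow_le).
  replace (/ L * / L * (/ L / (1 - rho)) * rho ^ n)
    with ((/ L * / L * rho ^ n) * (/ L / (1 - rho))) by ring.
  apply Rmult_le_compat; auto using Cmod_ge_0.
Qed.

Definition sq_tele_potential (n : nat) : C := (q ^ (n * n) * (1 + q ^ n) / mq q n ^ 2)%C.

Lemma sq_term_plus_tele_term n :
  (sq_term n + tele_term n = sq_tele_potential n - sq_tele_potential (S n))%C.
Proof.
  unfold sq_term, tele_term, sq_tele_potential. rewrite !mq_succ.
  replace (q ^ (S n * S n))%C with (q ^ (n * n) * q ^ S n * q ^ n)%C
    by (rewrite <- !Cpow_add_r; f_equal; nia).
  replace (q ^ (n * S n))%C with (q ^ (n * n) * q ^ n)%C
    by (rewrite <- !Cpow_add_r; f_equal; nia).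
  pose proof (mq_neq0 q hq n). pose proof (one_plus_qpow_neq0 q hq (S n)).
  rewrite (Cpow_S q n) in *. field_hyps.
Qed.

Lemma mq_alt_plus_sq G f : is_series_C mq_alt_term G -> is_series_C sq_term f ->
  (G + f = 2)%C.
Proof.
  intros HG Hf.
  pose proof (is_series_C_plus _ _ _ _ Hf (is_series_C_tele_term G HG)) as H1.
  assert (H2 : is_series_C (fun k => sq_term k + tele_term k)%C 2).
  { apply (is_lim_C_geom _ _ (2 * (/ L * / L)) rho); auto. intros n.
    assert (E : psum (fun k => sq_term k + tele_term k)%C n = (2 - sq_tele_potential n)%C).
    { induction n.
      - unfold sq_tele_potential. simpl. rewrite mq_0.
        apply injective_projections; simpl; field.
      - simpl. rewrite IHn, sq_term_plus_tele_term. ring. }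
    rewrite E. replace (2 - sq_tele_potential n - 2)%C with (- sq_tele_potential n)%C by ring.
    unfold sq_tele_potential, Cdiv. rewrite Cmod_opp, !Cmod_mult.
    pose proof (Cmod_one_plus_qpow_le n). pose proof (Cmod_qpow_le (n * n) n ltac:(nia)).
    pose proof (Cmod_inv_sq_le _ (Cmod_mq_ge n)).
    pose proof (Cmod_ge_0 (q ^ (n * n))). pose proof (Cmod_ge_0 (1 + q ^ n)).
    pose proof (Cmod_ge_0 (/ mq q n ^ 2)). pose proof (pow_le rho n ltac:(lra)).
    assert (0 <= / L * / L) by (apply Rmult_le_pos; left; apply Rinv_0_lt_compat; auto).
    replace (2 * (/ L * / L) * rho ^ n) with (rho ^ n * 2 * (/ L * / L)) by ring.
    apply Rmult_le_compat; auto; [apply Rmult_le_pos; auto|apply Rmult_le_compat; auto]. }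
  rewrite Cplus_comm. apply (is_series_C_unique _ _ _ H1 H2).
Qed.

Definition alpha_term (r : nat) : C := ((2 - kappa q r) * unit_alpha q r * q ^ (r * r))%C.

Lemma bailey_kernel_bound N r : Cmod (bailey_kernel q N r) <= / L * / L.
Proof.
  unfold bailey_kernel. pose proof (qq_neq0 q hq (N - r)). pose proof (qq_neq0 q hq (N + r)).
  replace (/ (qq q (N - r) * qq q (N + r)))%C with (/ qq q (N - r) * / qq q (N + r))%C
    by (field; auto).
  rewrite Cmod_mult.
  apply Rmult_le_compat; auto using Cmod_ge_0; apply Cmod_inv_le, Cmod_qq_ge; auto.
Qed.

Lemma unit_alpha_bound r : Cmod (unit_alpha q r) <= 2.
Proof.
  unfold unit_alpha. rewrite !Cmod_mult, Cmod_m1_pow.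
  set (e := match r with O => RtoC (1/2) | _ => RtoC 1 end).
  assert (Cmod e <= 1) by (unfold e; destruct r; rewrite Cmod_R, Rabs_pos_eq; lra).
  pose proof (Cmod_qpow_le (tri r) 0 ltac:(lia)). simpl in H0.
  pose proof (Cmod_one_plus_qpow_le r).
  pose proof (Cmod_ge_0 e). pose proof (Cmod_ge_0 (q ^ tri r)). pose proof (Cmod_ge_0 (1 + q ^ r)).
  replace 2 with (1 * 1 * 1 * 2) by ring.
  repeat apply Rmult_le_compat; try apply Rmult_le_pos; lra.
Qed.

Lemma kappa_bound r : Cmod (kappa q r) <= 4 * (/ (1 - rho) * / (1 - rho)).
Proof.
  unfold kappa, Cdiv. pose proof (one_plus_qpow_neq0 q hq r).
  replace (/ (1 + q ^ r) ^ 2)%C with (/ (1 + q ^ r) * / (1 + q ^ r))%C by (field; auto).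
  rewrite !Cmod_mult. replace (Cmod 4) with 4 by (rewrite Cmod_R, Rabs_pos_eq; lra).
  pose proof (Cmod_inv_one_plus_qpow_le r). pose proof (Cmod_qpow_le r 0 ltac:(lia)).
  simpl in H1. pose proof (Cmod_ge_0 (q ^ r)). pose proof (Cmod_ge_0 (/ (1 + q ^ r))).
  assert (Cmod (/ (1 + q ^ r)) * Cmod (/ (1 + q ^ r)) <= / (1 - rho) * / (1 - rho))
    by (apply Rmult_le_compat; lra).
  assert (0 <= Cmod (/ (1 + q ^ r)) * Cmod (/ (1 + q ^ r))) by (apply Rmult_le_pos; lra).
  nra.
Qed.

Lemma alpha_term_bound r :
  Cmod (alpha_term r) <= (2 + 4 * (/ (1 - rho) * / (1 - rho))) * 2 * rho ^ r.
Proof.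
  unfold alpha_term. rewrite !Cmod_mult.
  assert (Cmod (2 - kappa q r) <= 2 + 4 * (/ (1 - rho) * / (1 - rho))).
  { eapply Rle_trans; [apply Cmod_triangle|]. rewrite Cmod_opp.
    replace (Cmod 2) with 2 by (rewrite Cmod_R, Rabs_pos_eq; lra).
    pose proof (kappa_bound r). lra. }
  pose proof (unit_alpha_bound r). pose proof (Cmod_qpow_le (r * r) r ltac:(nia)).
  apply Rmult_le_compat; auto using Cmod_ge_0; [apply Rmult_le_pos; apply Cmod_ge_0|].
  apply Rmult_le_compat; auto using Cmod_ge_0.
Qed.

Lemma alpha_term_kernel_sum N :
  (2 / qq q N - psum (fun j => sq_term j / qq q (N - j))%C (S N))%C =
  psum (fun r => alpha_term r * bailey_kernel q N r)%C (S N).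
Proof.
  rewrite (psum_ext _ (fun j => q ^ (j * j) * / mq q j ^ 2 / qq q (N - j))%C)
    by (intros; unfold sq_term, Cdiv; ring).
  rewrite (bailey_lemma_limit q hq _ _ (kappa_bailey_pair q hq) N).
  unfold Cdiv at 1. rewrite <- inv_qq_expansion by auto.
  rewrite <- psum_scal, <- psum_minus. apply psum_ext. intros. unfold alpha_term. ring.
Qed.

Section TanneryLimits.

Variables (Qi f A : C).
Hypothesis HQ : is_lim_C (qq q) Qi.
Hypothesis Hf : is_series_C sq_term f.
Hypothesis HA : is_series_C alpha_term A.

Lemma qq_limit_neq0 : Qi <> RtoC 0.
Proof. apply (Cmod_pos_neq0 _ L); auto. apply (is_lim_C_Cmod_ge _ _ _ HQ), Cmod_qq_ge. Qed.

Lemma is_lim_C_qq_sub j : is_lim_C (fun N => qq q (N - j)) Qi.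
Proof. apply is_lim_C_subseq; auto. intros M. exists (M + j)%nat. intros; lia. Qed.

Lemma is_lim_C_sq_convolution :
  is_lim_C (fun N => psum (fun j => sq_term j / qq q (N - j))%C (S N)) (f / Qi)%C.
Proof.
  pose proof qq_limit_neq0.
  apply (tannery (fun N j => sq_term j / qq q (N - j))%C (fun j => sq_term j / Qi)%C S
                 (/ L * / L * / L) rho); auto.
  - intros k. apply is_lim_C_div; auto using is_lim_C_const, is_lim_C_qq_sub.
  - intros N k. unfold Cdiv. rewrite Cmod_mult.
    replace (/ L * / L * / L * rho ^ k) with ((/ L * / L * rho ^ k) * / L) by ring.
    apply Rmult_le_compat; auto using Cmod_ge_0, sq_term_bound.
    apply Cmod_inv_le, Cmod_qq_ge; auto.
  - intros M. exists M. intros; lia.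
  - replace (f / Qi)%C with (/ Qi * f)%C by (unfold Cdiv; ring).
    eapply is_series_C_ext; [|apply is_series_C_scal, Hf]. intros; cbv beta; unfold Cdiv; ring.
Qed.

Lemma is_lim_C_alpha_kernel :
  is_lim_C (fun N => psum (fun r => alpha_term r * bailey_kernel q N r)%C (S N))
           (A * / (Qi * Qi))%C.
Proof.
  pose proof qq_limit_neq0.
  apply (tannery (fun N r => alpha_term r * bailey_kernel q N r)%C
                 (fun r => alpha_term r * / (Qi * Qi))%C S
                 ((2 + 4 * (/ (1 - rho) * / (1 - rho))) * 2 * (/ L * / L)) rho); auto.
  - intros k. apply is_lim_C_scal, is_lim_C_inv.
    + apply is_lim_C_mult; [apply is_lim_C_qq_sub|apply (is_lim_C_shift (qq q) Qi k HQ)].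
    + apply Cmult_neq_0; auto.
  - intros N k. rewrite Cmod_mult.
    match goal with |- _ <= ?M * ?LL * ?R => replace (M * LL * R) with (M * R * LL) by ring end.
    apply Rmult_le_compat; auto using Cmod_ge_0, alpha_term_bound, bailey_kernel_bound.
  - intros M. exists M. intros; lia.
  - replace (A * / (Qi * Qi))%C with (/ (Qi * Qi) * A)%C by ring.
    eapply is_series_C_ext; [|apply is_series_C_scal, HA]. intros; cbv beta; ring.
Qed.

Lemma sq_series_product : ((2 - f) * Qi = A)%C.
Proof.
  pose proof qq_limit_neq0.
  assert (Hlim : is_lim_C (fun N => psum (fun r => alpha_term r * bailey_kernel q N r)%C (S N))
                          (2 / Qi - f / Qi)%C).
  { eapply is_lim_C_ext; [intros; apply alpha_term_kernel_sum|].
    apply is_lim_C_minus; [|apply is_lim_C_sq_convolution].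
    apply is_lim_C_div; auto using is_lim_C_const. }
  pose proof (is_lim_C_unique _ _ _ Hlim is_lim_C_alpha_kernel) as E.
  apply (f_equal (fun t => t * (Qi * Qi))%C) in E.
  replace ((2 - f) * Qi)%C with ((2 / Qi - f / Qi) * (Qi * Qi))%C by (field; auto).
  rewrite E. field. auto.
Qed.

End TanneryLimits.

Definition bilateral_pos_term (k : nat) : C :=
  ((-1) ^ k * q ^ (3 * tri (S k)) / (1 + q ^ k))%C.

Definition bilateral_neg_term (m : nat) : C :=
  ((-1) ^ S m * q ^ (3 * tri (S m) + S m) / (q ^ S m + 1))%C.

Lemma alpha_term_0 : alpha_term 0 = (2 * bilateral_pos_term 0)%C.
Proof.
  unfold alpha_term, bilateral_pos_term, unit_alpha, kappa. simpl.
  apply injective_projections; simpl; field.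
Qed.

(* (2 - kappa r) (1 + q^r) = 2 (1 + q^(2r)) / (1 + q^r): the two summands are
   the terms n = r and n = -r of the bilateral sum. *)
Lemma alpha_term_succ m :
  alpha_term (S m) = (2 * bilateral_pos_term (S m) + 2 * bilateral_neg_term m)%C.
Proof.
  unfold alpha_term, bilateral_pos_term, bilateral_neg_term, unit_alpha, kappa.
  remember (S m) as k. pose proof (tri_double k).
  replace (q ^ (3 * tri (S k)))%C with (q ^ tri k * q ^ (k * k) * (q ^ k * q ^ k))%C
    by (rewrite <- !Cpow_add_r; f_equal; change (tri (S k)) with (tri k + k)%nat; nia).
  replace (q ^ (3 * tri k + k))%C with (q ^ tri k * q ^ (k * k))%C
    by (rewrite <- !Cpow_add_r; f_equal; nia).
  pose proof (one_plus_qpow_neq0 q hq k).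
  assert ((q ^ k + 1)%C <> RtoC 0) by (rewrite Cplus_comm; auto).
  field_hyps.
Qed.

Lemma psum_alpha_term N :
  psum alpha_term (S N) = (2 * psum bilateral_pos_term (S N) + 2 * psum bilateral_neg_term N)%C.
Proof.
  induction N; [simpl; rewrite alpha_term_0; ring|].
  change (psum alpha_term (S (S N))) with (psum alpha_term (S N) + alpha_term (S N))%C.
  rewrite IHN, alpha_term_succ. simpl. ring.
Qed.

Lemma bilateral_pos_term_bound k : Cmod (bilateral_pos_term k) <= / (1 - rho) * rho ^ k.
Proof.
  unfold bilateral_pos_term, Cdiv. rewrite !Cmod_mult, Cmod_m1_pow, Rmult_1_l, Rmult_comm.
  apply Rmult_le_compat; auto using Cmod_ge_0, Cmod_inv_one_plus_qpow_le.
  apply Cmod_qpow_le. simpl. nia.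
Qed.

Lemma bilateral_neg_term_bound m : Cmod (bilateral_neg_term m) <= / (1 - rho) * rho ^ m.
Proof.
  unfold bilateral_neg_term, Cdiv. rewrite !Cmod_mult, Cmod_m1_pow, Rmult_1_l, Rmult_comm.
  rewrite Cplus_comm.
  apply Rmult_le_compat; auto using Cmod_ge_0, Cmod_inv_one_plus_qpow_le.
  apply Cmod_qpow_le. lia.
Qed.

Lemma is_series_C_alpha_term A Bp Bn : is_series_C alpha_term A ->
  is_series_C bilateral_pos_term Bp -> is_series_C bilateral_neg_term Bn ->
  A = (2 * (Bp + Bn))%C.
Proof.
  intros HA HP HN.
  apply (is_lim_C_unique (fun N => psum alpha_term (N + 1))); [apply is_lim_C_shift; auto|].
  eapply is_lim_C_ext.
  { intros N. rewrite Nat.add_1_r. symmetry. apply psum_alpha_term. }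
  replace (2 * (Bp + Bn))%C with (2 * Bp + 2 * Bn)%C by ring.
  apply is_lim_C_plus; apply is_lim_C_scal; auto.
  eapply is_lim_C_ext; [|apply (is_lim_C_shift _ _ 1 HP)].
  intros. cbv beta. rewrite Nat.add_1_r. reflexivity.
Qed.

Lemma mq_alt_series_mul_qq Qi G Bp Bn : is_lim_C (qq q) Qi -> is_series_C mq_alt_term G ->
  is_series_C bilateral_pos_term Bp -> is_series_C bilateral_neg_term Bn ->
  (G * Qi = 2 * (Bp + Bn))%C.
Proof.
  intros HQ HG HP HN.
  destruct (is_series_C_geom _ _ rho rho_range sq_term_bound) as [f Hf].
  destruct (is_series_C_geom _ _ rho rho_range alpha_term_bound) as [A HA].
  replace G with (2 - f)%C by (rewrite <- (mq_alt_plus_sq G f HG Hf); ring).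
  rewrite (sq_series_product Qi f A HQ Hf HA).
  apply is_series_C_alpha_term; auto.
Qed.

End Limits.

(** * Odd-index terms *)

Section OddPart.

Variable q : C.
Hypothesis hq : Cmod q < 1.

Definition mq_pos_term (m : nat) : C := (q ^ m / mq q m)%C.

Lemma psum_mq_pos_term M : psum mq_pos_term (S M) = (2 - / mq q M)%C.
Proof.
  induction M.
  - simpl. unfold mq_pos_term. rewrite mq_0. simpl. apply injective_projections; simpl; field.
  - change (psum mq_pos_term (S (S M))) with (psum mq_pos_term (S M) + mq_pos_term (S M))%C.
    rewrite IHM. unfold mq_pos_term. rewrite mq_succ.
    pose proof (mq_neq0 q hq M). pose proof (one_plus_qpow_neq0 q hq (S M)). field_hyps.
Qed.

Lemma mq_alt_term_eq m : mq_alt_term q m = ((-1) ^ m * mq_pos_term m)%C.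
Proof.
  unfold mq_alt_term, mq_pos_term.
  replace (- q)%C with (RtoC (-1) * q)%C by (apply injective_projections; simpl; ring).
  rewrite Cpow_mult_l. unfold Cdiv. ring.
Qed.

Lemma m1_pow_even N : ((-1) ^ (2 * N))%C = RtoC 1.
Proof.
  rewrite Cpow_mult_r.
  replace ((-1) ^ 2)%C with (RtoC 1) by (simpl; apply injective_projections; simpl; ring).
  apply Cpow_1_l.
Qed.

Lemma psum_mq_pos_term_odd N :
  (2 * psum (fun n => mq_pos_term (2 * n + 1)) N =
   psum mq_pos_term (2 * N) - psum (mq_alt_term q) (2 * N))%C.
Proof.
  induction N; [simpl; ring|].
  replace (2 * S N)%nat with (S (S (2 * N))) by lia.
  change (psum (fun n => mq_pos_term (2 * n + 1)) (S N)) with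
    (psum (fun n => mq_pos_term (2 * n + 1)) N + mq_pos_term (2 * N + 1))%C.
  change (psum ?f (S (S (2 * N)))) with (psum f (2 * N) + f (2 * N)%nat + f (S (2 * N)))%C.
  rewrite !mq_alt_term_eq, Cpow_S, m1_pow_even, Nat.add_1_r.
  transitivity (2 * psum (fun n => mq_pos_term (2 * n + 1)) N + 2 * mq_pos_term (S (2 * N)))%C;
    [ring|].
  rewrite IHN. ring.
Qed.

Lemma is_series_C_mq_pos_term_odd MQi G : is_lim_C (mq q) MQi ->
  is_series_C (mq_alt_term q) G ->
  is_series_C (fun n => mq_pos_term (2 * n + 1)) ((2 - / MQi - G) / 2)%C.
Proof.
  intros HM HG.
  assert (HMi : MQi <> RtoC 0).
  { apply (Cmod_pos_neq0 _ (qp_lower_bound (Cmod q))); [apply qp_lower_bound_pos|].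
    apply (is_lim_C_Cmod_ge _ _ _ HM). intros n.
    apply Cmod_qp_ge; [apply Cmod_q_range; auto|rewrite Cmod_opp|]; lra. }
  apply (is_lim_C_unshift _ _ 1).
  apply (is_lim_C_ext
    (fun N => / 2 * ((2 - / mq q (2 * N + 1)) - psum (mq_alt_term q) (2 * N + 2)))%C).
  { intros N. pose proof (psum_mq_pos_term_odd (N + 1)) as HO.
    replace (2 * (N + 1))%nat with (S (2 * N + 1)) in HO by lia.
    rewrite psum_mq_pos_term in HO. replace (S (2 * N + 1)) with (2 * N + 2)%nat in HO by lia.
    rewrite <- HO. field. }
  replace ((2 - / MQi - G) / 2)%C with (/ 2 * ((2 - / MQi) - G))%C by (unfold Cdiv; ring).
  apply is_lim_C_scal, is_lim_C_minus.
  - apply is_lim_C_minus; [apply is_lim_C_const|]. apply is_lim_C_inv; auto.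
    apply (is_lim_C_subseq _ _ (fun N => 2 * N + 1)%nat); auto. intros M. exists M. intros; lia.
  - apply (is_lim_C_subseq _ _ (fun N => 2 * N + 2)%nat); auto. intros M. exists M. intros; lia.
Qed.

Lemma qp_odd_even n :
  (qp (- q) (q ^ 2) (n + 1) * qp (- (q ^ 2)) (q ^ 2) n = mq q (2 * n + 1))%C.
Proof.
  induction n; [unfold mq, qp; simpl; ring|].
  replace (S n + 1)%nat with (S (n + 1)) by lia. rewrite !qp_succ.
  replace (2 * S n + 1)%nat with (S (S (2 * n + 1))) by lia. rewrite !mq_succ, <- IHn.
  rewrite <- !Cpow_mult_r.
  replace (q ^ S (S (2 * n + 1)))%C with (q * q ^ (2 * (n + 1)))%C
    by (rewrite <- Cpow_S; f_equal; lia).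
  replace (q ^ S (2 * n + 1))%C with (q ^ 2 * q ^ (2 * n))%C
    by (rewrite <- Cpow_add_r; f_equal; lia).
  ring.
Qed.

Lemma Cmod_sq_le : Cmod (q ^ 2) <= Cmod q.
Proof. rewrite Cmod_pow. simpl. pose proof (Cmod_ge_0 q). nra. Qed.

Lemma qp_neg_sq_neq0 n : qp (- (q ^ 2)) (q ^ 2) n <> RtoC 0.
Proof.
  apply (qp_neq0 _ _ (Cmod q)); [apply Cmod_q_range; auto| |apply Cmod_sq_le].
  rewrite Cmod_opp. apply Cmod_sq_le.
Qed.

Lemma is_lim_C_qp_neg_even_tail Xi n : is_lim_C (qp (- (q ^ 2)) (q ^ 2)) Xi ->
  is_lim_C (qp (- ((- q) ^ (2 * n + 2))) ((- q) ^ 2)) (Xi / qp (- (q ^ 2)) (q ^ 2) n)%C.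
Proof.
  intros HX. replace ((- q) ^ 2)%C with (q ^ 2)%C by (simpl; ring).
  apply (is_lim_C_ext (fun m => qp (- (q ^ 2)) (q ^ 2) (n + m) / qp (- (q ^ 2)) (q ^ 2) n)%C).
  - intros m. rewrite qp_add.
    replace (- ((- q) ^ (2 * n + 2)))%C with (- q ^ 2 * (q ^ 2) ^ n)%C.
    + pose proof (qp_neg_sq_neq0 n). field_hyps.
    + replace (2 * n + 2)%nat with (2 * (n + 1))%nat by lia.
      rewrite !Cpow_mult_r, Cpow_add_r.
      replace ((- q) ^ 2)%C with (q ^ 2)%C by (simpl; ring). rewrite Cpow_1_r. ring.
  - apply is_lim_C_div; [|apply is_lim_C_const|apply qp_neg_sq_neq0].
    apply (is_lim_C_subseq _ _ (fun m => n + m)%nat); auto. intros M. exists M. intros; lia.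
Qed.

Lemma neg_q_odd_pow n : ((- q) ^ (2 * n + 1))%C = (- q ^ (2 * n + 1))%C.
Proof.
  replace (- q)%C with (RtoC (-1) * q)%C by (apply injective_projections; simpl; ring).
  rewrite Cpow_mult_l, Nat.add_1_r, Cpow_S, m1_pow_even.
  apply injective_projections; simpl; ring.
Qed.

Lemma F_term_neg_q n Xi :
  ((- q) ^ (2 * n + 1) * (Xi / qp (- (q ^ 2)) (q ^ 2) n) / qp (- q) ((- q) ^ 2) (n + 1)
   = - Xi * mq_pos_term (2 * n + 1))%C.
Proof.
  replace ((- q) ^ 2)%C with (q ^ 2)%C by (simpl; ring).
  unfold mq_pos_term. rewrite <- (qp_odd_even n), neg_q_odd_pow.
  pose proof (qp_neg_sq_neq0 n).
  assert (qp (- q) (q ^ 2) (n + 1) <> RtoC 0).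
  { apply (qp_neq0 _ _ (Cmod q)); [apply Cmod_q_range; auto|rewrite Cmod_opp; lra|].
    apply Cmod_sq_le. }
  field_hyps.
Qed.

End OddPart.

(** * Transfer to [Cplx] *)

Definition toC (z : Cplx) : C := (Defs.Re z, Defs.Im z).

Lemma toC_inj z w : toC z = toC w -> z = w.
Proof. destruct z, w. unfold toC. simpl. intros H. inversion H. reflexivity. Qed.

Lemma toC_add z w : toC (Cadd z w) = (toC z + toC w)%C. Proof. reflexivity. Qed.
Lemma toC_opp z : toC (Defs.Copp z) = (- toC z)%C. Proof. reflexivity. Qed.
Lemma toC_sub z w : toC (Csub z w) = (toC z - toC w)%C. Proof. reflexivity. Qed.
Lemma toC_mul z w : toC (Cmul z w) = (toC z * toC w)%C. Proof. reflexivity. Qed.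
Lemma toC_div z w : toC (Defs.Cdiv z w) = (toC z / toC w)%C. Proof. reflexivity. Qed.
Lemma toC_one : toC Cone = RtoC 1. Proof. reflexivity. Qed.
Lemma toC_two : toC Ctwo = RtoC 2. Proof. reflexivity. Qed.
Lemma Cnorm_toC z : Cnorm z = Cmod (toC z). Proof. reflexivity. Qed.

Lemma toC_pow z n : toC (Defs.Cpow z n) = (toC z ^ n)%C.
Proof. induction n; simpl; [reflexivity|]. rewrite toC_mul, IHn. reflexivity. Qed.

Lemma toC_Cpsum f n : toC (Cpsum f n) = psum (fun k => toC (f k)) n.
Proof. induction n; simpl; [reflexivity|]. rewrite toC_add, IHn. reflexivity. Qed.

Lemma toC_qpoch a b n : toC (qpoch a b n) = qp (toC a) (toC b) n.
Proof.
  unfold qpoch, qp. induction n; simpl; [reflexivity|].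
  rewrite toC_mul, IHn, toC_sub, toC_mul, toC_pow. reflexivity.
Qed.

Lemma toC_Clim u c : is_lim_C (fun n => toC (u n)) c -> toC (Clim u) = c.
Proof.
  intros H. set (c' := Cmk (fst c) (snd c)).
  assert (Hc : Ccv u c').
  { intros eps He. destruct (H eps He) as [N HN]. exists N. intros n Hn.
    rewrite Cnorm_toC, toC_sub. destruct c. apply HN. lia. }
  unfold Clim. apply (is_lim_C_unique (fun n => toC (u n))); auto.
  assert (Hl : Ccv u (epsilon (inhabits Czero) (fun l => Ccv u l)))
    by (apply epsilon_spec; exists c'; auto).
  intros eps He. destruct (Hl eps He) as [N HN]. exists N. intros n Hn.
  rewrite <- toC_sub, <- Cnorm_toC. apply HN. lia.
Qed.

Lemma toC_Cseries f c : is_series_C (fun k => toC (f k)) c -> toC (Cseries f) = c.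
Proof.
  intros H. apply toC_Clim. eapply is_lim_C_ext; [|exact H]. intros. symmetry. apply toC_Cpsum.
Qed.

Lemma toC_qpoch_inf a b c : is_lim_C (qp (toC a) (toC b)) c -> toC (qpoch_inf a b) = c.
Proof.
  intros H. apply toC_Clim. eapply is_lim_C_ext; [|exact H]. intros. symmetry. apply toC_qpoch.
Qed.

Lemma toC_m1 : toC (Defs.Copp Cone) = RtoC (-1).
Proof. apply injective_projections; simpl; ring. Qed.

Lemma half_tri_pos k : (3 * k * (k + 1) / 2 = 3 * tri (S k))%nat.
Proof.
  pose proof (tri_double k). change (tri (S k)) with (tri k + k)%nat.
  replace (3 * k * (k + 1))%nat with ((3 * (tri k + k)) * 2)%nat by nia.
  apply Nat.div_mul. lia.
Qed.

Lemma half_tri_neg m : (3 * S m * (S m - 1) / 2 + S m = 3 * tri (S m) + S m)%nat.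
Proof.
  f_equal. pose proof (tri_double m). change (tri (S m)) with (tri m + m)%nat.
  replace (3 * S m * (S m - 1))%nat with ((3 * (tri m + m)) * 2)%nat by nia.
  apply Nat.div_mul. lia.
Qed.

Lemma toC_bil_term_pos q k : toC (bil_term q (Z.of_nat k)) = bilateral_pos_term (toC q) k.
Proof.
  unfold bil_term. rewrite (proj2 (Z.leb_le 0 (Z.of_nat k)) (Nat2Z.is_nonneg k)), Nat2Z.id.
  cbv zeta. rewrite toC_div, toC_mul, !toC_pow, toC_add, toC_one, toC_pow, toC_m1, half_tri_pos.
  reflexivity.
Qed.

Lemma toC_bil_term_neg q m :
  toC (bil_term q (- Z.of_nat (S m))) = bilateral_neg_term (toC q) m.
Proof.
  unfold bil_term. rewrite (proj2 (Z.leb_gt 0 (- Z.of_nat (S m))) ltac:(lia)).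
  rewrite Z.opp_involutive, Nat2Z.id.
  cbv zeta. rewrite toC_div, toC_mul, !toC_pow, toC_add, toC_one, toC_pow, toC_m1, half_tri_neg.
  reflexivity.
Qed.

Lemma toC_F_ed_ou_neg q Xi MQi G : Cmod (toC q) < 1 ->
  is_lim_C (qp (- (toC q ^ 2)) (toC q ^ 2)) Xi -> is_lim_C (mq (toC q)) MQi ->
  is_series_C (mq_alt_term (toC q)) G ->
  toC (F_ed_ou (Defs.Copp q)) = (- Xi * ((2 - / MQi - G) / 2))%C.
Proof.
  intros hq HX HMQ HG. unfold F_ed_ou. apply toC_Cseries.
  eapply is_series_C_ext; [|apply is_series_C_scal, is_series_C_mq_pos_term_odd; eauto].
  intros n. cbv beta.
  rewrite toC_div, !toC_mul, !toC_pow, toC_opp, toC_qpoch, toC_pow, toC_opp.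
  rewrite (toC_qpoch_inf _ _ (Xi / qp (- (toC q ^ 2)) (toC q ^ 2) n)%C).
  - symmetry. apply F_term_neg_q; auto.
  - rewrite toC_opp, !toC_pow, toC_opp. apply is_lim_C_qp_neg_even_tail; auto.
Qed.

Lemma toC_Zsum_bil_term q Bp Bn :
  is_series_C (bilateral_pos_term (toC q)) Bp -> is_series_C (bilateral_neg_term (toC q)) Bn ->
  toC (Zsum (bil_term q)) = (Bp + Bn)%C.
Proof.
  intros HP HN. unfold Zsum. rewrite toC_add. f_equal; apply toC_Cseries.
  - eapply is_series_C_ext; [|exact HP]. intros. symmetry. apply toC_bil_term_pos.
  - eapply is_series_C_ext; [|exact HN]. intros. symmetry. apply toC_bil_term_neg.
Qed.

Import Defs.

Theorem theorem1p1 (q : Cplx) (hq : Cnorm q < 1) :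
  F_ed_ou (Copp q) =
  Cmul (Copp (Cdiv (qpoch_inf (Copp (Cpow q 2)) (Cpow q 2)) Ctwo))
       (Csub (Csub Ctwo (Cdiv Cone (qpoch_inf (Copp q) q)))
             (Cmul (Cdiv Ctwo (qpoch_inf q q)) (Zsum (bil_term q)))).
Proof.
  apply toC_inj. rewrite Cnorm_toC in hq. set (z := toC q) in *.
  pose proof (Cmod_q_range z hq) as Hr.
  destruct (qp_cv z z (Cmod z) Hr ltac:(lra) ltac:(lra)) as [Qi [HQ HQl]].
  destruct (qp_cv (- z) z (Cmod z) Hr ltac:(rewrite Cmod_opp; lra) ltac:(lra))
    as [MQi [HMQ HMQl]].
  destruct (qp_cv (- (z ^ 2)) (z ^ 2) (Cmod z) Hr
              ltac:(rewrite Cmod_opp; apply Cmod_sq_le; auto) (Cmod_sq_le z hq)) as [Xi [HX _]].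
  destruct (is_series_C_geom _ _ _ Hr (mq_alt_term_bound z hq)) as [G HG].
  destruct (is_series_C_geom _ _ _ Hr (bilateral_pos_term_bound z hq)) as [Bp HBp].
  destruct (is_series_C_geom _ _ _ Hr (bilateral_neg_term_bound z hq)) as [Bn HBn].
  pose proof (mq_alt_series_mul_qq z hq Qi G Bp Bn HQ HG HBp HBn) as Hcore.
  pose proof (qp_lower_bound_pos (Cmod z)).
  assert (Qi <> RtoC 0) by (apply (Cmod_pos_neq0 _ _ H HQl)).
  assert (MQi <> RtoC 0) by (apply (Cmod_pos_neq0 _ _ H HMQl)).
  rewrite (toC_F_ed_ou_neg q Xi MQi G hq HX HMQ HG).
  rewrite toC_mul, toC_opp, !toC_sub, toC_mul, !toC_div, !toC_two, toC_one.
  rewrite (toC_qpoch_inf _ _ Xi) by (rewrite toC_opp, !toC_pow; exact HX).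
  rewrite (toC_qpoch_inf _ _ MQi) by (rewrite toC_opp; exact HMQ).
  rewrite (toC_qpoch_inf _ _ Qi HQ), (toC_Zsum_bil_term q Bp Bn HBp HBn).
  replace G with (2 * (Bp + Bn) / Qi)%C by (rewrite <- Hcore; field; auto).
  field. auto.
Qed.
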